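(* Let $(X,\rho,\mu)$ be a $K$-doubling metric measure space, $(M,d)$ a complete metric space, $Q\ge1$ an integer, and $\mathcal D$ a differentiably complete approximate $X$-distribution for $M$. Then the approximate $X$-distribution $\mathcal D^Q$ for $\mathcal A_Q(M)$ is differentiably complete.
   Context: A $K$-doubling metric measure space ($K>0$) is a triple $(X,\rho,\mu)$ where $(X,\rho)$ is a complete separable metric space and $\mu$ is a Borel-regular outer measure with $0<\mu(B_{2r}(x))\le K\mu(B_r(x))<+\infty$ for all $x,r>0$. A set $E\ni x$ is a $\mu$-neighborhood of $x$ if there is a Borel $B\subseteq E$ with $\lim_{r\to0^+}\mu(B_r(x)\setminus B)/\mu(B_r(x))=0$; $x$ is a $\mu$-accumulation point of $A$ if $A\cap U\setminus\{x\}\neq\emptyset$ for all $\mu$-neighborhoods $U$ of $x$; $\mu\text{-}\lim$, $\mu\text{-}\limsup$ denote limit and upper limit along $\mu$-neighborhoods (e.g. $\mu\text{-}\limsup_{y\in A,y\to x}g(y)=\inf_U\sup_{y\in U\cap A\setminus\{x\}}g(y)$). $\mathcal A_Q(M)$ is the set of measures $\sum_{i=1}^Q[\![P_i]\!]$ (Dirac masses at not necessarily distinct $P_i\in M$) with metric $\mathcal G(\sum_i[\![A_i]\!],\sum_i[\![B_i]\!])=\min_\sigma\sqrt{\sum_i d(A_i,B_{\sigma(i)})^2}$ over permutations $\sigma$; it is a complete metric space. For a complete metric space $(N,e)$, $x\in X$, $P\in N$, $\mathcal C^\mu_{x,P}(N)$ is the set of classes $[F]$ of Lipschitz maps $F\colon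 B\to N$ on a $\mu$-neighborhood $B$ of $x$ with $F(x)=P$, modulo $F\sim G\iff\mu\text{-}\lim_{y\to x}e(F(y),G(y))/\rho(y,x)=0$; an approximate $X$-distribution for $N$ is any subset $\mathcal E$ of $\bigsqcup_{(x,P)}\mathcal C^\mu_{x,P}(N)$, and $\mathcal E_{x,P}=\mathcal E\cap\mathcal C^\mu_{x,P}(N)$. For $f\colon A\to N$ and a $\mu$-accumulation point $x\in A$ of $A$, $f$ is approximately $\mathcal E$-differentiable at $x$ if some $[F]\in\mathcal E_{x,f(x)}$ satisfies $\mu\text{-}\lim_{y\in A,y\to x}e(f(y),F(y))/\rho(y,x)=0$. $A_f^\mu$ is the set of $\mu$-accumulation points $x\in A$ of $A$ with $\mu\text{-}\limsup_{y\in A,y\to x}e(f(y),f(x))/\rho(y,x)<\infty$. $\mathcal E$ is differentiably complete if for every nonempty closed $C\subseteq X$ and every Lipschitz $g\colon C\to N$ and every $\mu$-measurable $B\subseteq A_g^\mu$, $g$ is approximately $\mathcal E$-differentiable at $\mu$-a.e. point of $B$. Finally, $\mathcal D^Q$ is defined by: for $\mathbf P=\sum_{i=1}^Q[\![P_i]\!]\in\mathcal A_Q(M)$, $[\mathbf F]\in\mathcal D^Q_{x_0,\mathbf P}$ iff there exist $[F_i]\in\mathcal D_{x_0,P_i}$, $i=1,\dots,Q$, such that $\mathbf F(x)=\sum_{i=1}^Q[\![F_i(x)]\!]$ for all $x$ in a Borel $\mu$-neighborhood of $x_0$, and $P_i=P_j$ implies $[F_i]=[F_j]$. *)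

From Stdlib Require Import Reals ClassicalEpsilon.
From Coquelicot Require Import Rbar Lim_seq.
From mathcomp Require Import all_boot fingroup perm.

Set Implicit Arguments.
Unset Strict Implicit.
Unset Printing Implicit Defensive.

Local Open Scope R_scope.

Definition is_metric (T : Type) (dist : T -> T -> R) : Prop :=
  (forall x y, 0 <= dist x y) /\
  (forall x y, dist x y = 0 <-> x = y) /\
  (forall x y, dist x y = dist y x) /\
  (forall x y z, dist x z <= dist x y + dist y z).

Definition cauchy_seq (T : Type) (dist : T -> T -> R) (u : nat -> T) : Prop :=
  forall eps, 0 < eps -> exists N : nat,
    forall n m : nat, (N <= n)%nat -> (N <= m)%nat -> dist (u n) (u m) < eps.

Definition converges_to (T : Type) (dist : T -> T -> R) (u : nat -> T) (l : T) : Prop :=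
  forall eps, 0 < eps -> exists N : nat, forall n : nat, (N <= n)%nat -> dist (u n) l < eps.

Definition complete_metric (T : Type) (dist : T -> T -> R) : Prop :=
  is_metric dist /\
  forall u : nat -> T, cauchy_seq dist u -> exists l, converges_to dist u l.

Definition separable (T : Type) (dist : T -> T -> R) : Prop :=
  exists S : T -> Prop,
    (exists f : T -> nat, forall x y, S x -> S y -> f x = f y -> x = y) /\
    (forall x eps, 0 < eps -> exists s, S s /\ dist x s < eps).

Definition ball (T : Type) (dist : T -> T -> R) (x : T) (r : R) : T -> Prop :=
  fun y => dist y x < r.

Definition is_open (T : Type) (dist : T -> T -> R) (U : T -> Prop) : Prop :=
  forall x, U x -> exists r, 0 < r /\ forall y, ball dist x r y -> U y.

Definition is_closed (T : Type) (dist : T -> T -> R) (C : T -> Prop) : Prop :=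
  is_open dist (fun x => ~ C x).

Definition sigma_algebra (T : Type) (S : (T -> Prop) -> Prop) : Prop :=
  S (fun _ => False) /\
  (forall A, S A -> S (fun x => ~ A x)) /\
  (forall A : nat -> T -> Prop, (forall n, S (A n)) -> S (fun x => exists n, A n x)).

Definition borel (T : Type) (dist : T -> T -> R) (A : T -> Prop) : Prop :=
  forall S : (T -> Prop) -> Prop,
    sigma_algebra S -> (forall U, is_open dist U -> S U) -> S A.

Fixpoint Rbar_psum (a : nat -> Rbar) (N : nat) : Rbar :=
  match N with
  | O => Rbar.Finite 0
  | S N' => Rbar_plus (Rbar_psum a N') (a N')
  end.

Definition outer_measure (T : Type) (mu : (T -> Prop) -> Rbar) : Prop :=
  mu (fun _ => False) = Rbar.Finite 0 /\
  (forall A, Rbar_le (Rbar.Finite 0) (mu A)) /\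
  (forall A B : T -> Prop, (forall x, A x -> B x) -> Rbar_le (mu A) (mu B)) /\
  (forall A : nat -> T -> Prop,
     Rbar_le (mu (fun x => exists n, A n x))
             (Sup_seq (Rbar_psum (fun n => mu (A n))))).

Definition mu_measurable (T : Type) (mu : (T -> Prop) -> Rbar) (A : T -> Prop) : Prop :=
  forall E : T -> Prop,
    mu E = Rbar_plus (mu (fun x => E x /\ A x)) (mu (fun x => E x /\ ~ A x)).

Definition borel_regular (T : Type) (dist : T -> T -> R) (mu : (T -> Prop) -> Rbar) : Prop :=
  outer_measure mu /\
  (forall A, borel dist A -> mu_measurable mu A) /\
  (forall A, exists B, borel dist B /\ (forall x, A x -> B x) /\ mu B = mu A).

Definition doubling_mms (X : Type) (rho : X -> X -> R) (mu : (X -> Prop) -> Rbar) (K : R) : Prop :=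
  0 < K /\
  complete_metric rho /\ separable rho /\ borel_regular rho mu /\
  forall x r, 0 < r ->
    Rbar_lt (Rbar.Finite 0) (mu (ball rho x (2 * r))) /\
    Rbar_le (mu (ball rho x (2 * r))) (Rbar_mult (Rbar.Finite K) (mu (ball rho x r))) /\
    Rbar_lt (mu (ball rho x r)) p_infty.

Section MuNotions.
Variables (X : Type) (rho : X -> X -> R) (mu : (X -> Prop) -> Rbar).

Definition mu_nbhd (x : X) (E : X -> Prop) : Prop :=
  E x /\
  exists B : X -> Prop, borel rho B /\ (forall y, B y -> E y) /\
    forall eps, 0 < eps -> exists delta, 0 < delta /\
      forall r, 0 < r -> r < delta ->
        Rabs (real (mu (fun y => ball rho x r y /\ ~ B y)) / real (mu (ball rho x r))) < eps.

Definition mu_acc (A : X -> Prop) (x : X) : Prop :=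
  forall U, mu_nbhd x U -> exists y, A y /\ U y /\ y <> x.

Definition mu_lim_within (A : X -> Prop) (x : X) (g : X -> R) (L : R) : Prop :=
  forall eps, 0 < eps -> exists U, mu_nbhd x U /\
    forall y, U y -> A y -> y <> x -> Rabs (g y - L) < eps.

(* mu-limsup_{y in A, y -> x} g(y) < +oo, i.e.
   inf_U sup_{y in U /\ A \ {x}} g(y) < +oo *)
Definition mu_limsup_finite (A : X -> Prop) (x : X) (g : X -> R) : Prop :=
  exists U C, mu_nbhd x U /\ forall y, U y -> A y -> y <> x -> g y <= C.

Variables (N : Type) (e : N -> N -> R).

Definition lipschitz_on (B : X -> Prop) (F : X -> N) : Prop :=
  exists L, forall y z, B y -> B z -> e (F y) (F z) <= L * rho y z.

(* (B, F) represents an element of C^mu_{x, F x}(N): F : B -> N Lipschitz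
   on a mu-neighbourhood B of x (values of F outside B are irrelevant). *)
Definition germ_rep (x : X) (B : X -> Prop) (F : X -> N) : Prop :=
  mu_nbhd x B /\ lipschitz_on B F.

Definition germ_equiv (x : X) (B : X -> Prop) (F : X -> N) (B' : X -> Prop) (G : X -> N) : Prop :=
  F x = G x /\
  mu_lim_within (fun y => B y /\ B' y) x (fun y => e (F y) (G y) / rho y x) 0.

(* An approximate X-distribution E for N is a subset of the disjoint union
   of the classes C^mu_{x,P}(N); we encode it as the predicate
   "E x B F  <->  [F] (defined on B, at x) belongs to E", which must hold only
   of genuine representatives and be closed under ~. *)
Definition approx_distribution (E : X -> (X -> Prop) -> (X -> N) -> Prop) : Prop :=
  (forall x B F, E x B F -> germ_rep x B F) /\
  (forall x B F B' G, E x B F -> germ_rep x B' G -> germ_equiv x B F B' G -> E x B' G).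

Definition approx_diff (E : X -> (X -> Prop) -> (X -> N) -> Prop)
    (A : X -> Prop) (f : X -> N) (x : X) : Prop :=
  A x /\ mu_acc A x /\
  exists B F, E x B F /\ F x = f x /\
    mu_lim_within (fun y => A y /\ B y) x (fun y => e (f y) (F y) / rho y x) 0.

Definition A_mu (A : X -> Prop) (f : X -> N) (x : X) : Prop :=
  A x /\ mu_acc A x /\ mu_limsup_finite A x (fun y => e (f y) (f x) / rho y x).

Definition diff_complete (E : X -> (X -> Prop) -> (X -> N) -> Prop) : Prop :=
  forall (C : X -> Prop) (g : X -> N) (B : X -> Prop),
    (exists c, C c) -> is_closed rho C -> lipschitz_on C g ->
    mu_measurable mu B -> (forall x, B x -> A_mu C g x) ->
    mu (fun x => B x /\ ~ approx_diff E C g x) = Rbar.Finite 0.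

End MuNotions.

(* A_Q(M): sums of Q Dirac masses = Q-tuples up to permutation         *)

Section AQ.
Variables (M : Type) (Q : nat).

(* the set of reorderings of a Q-tuple: it determines sum_i [[t i]] *)
Definition perm_orbit (t : 'I_Q -> M) : ('I_Q -> M) -> Prop :=
  fun t' => exists s : 'S_Q, forall i, t' i = t (s i).

Definition AQ : Type := { S : ('I_Q -> M) -> Prop | exists t, S = perm_orbit t }.

Definition AQ_of (t : 'I_Q -> M) : AQ := exist _ (perm_orbit t) (ex_intro _ t erefl).

Definition AQ_rep (P : AQ) : 'I_Q -> M :=
  proj1_sig (constructive_indefinite_description _ (proj2_sig P)).

Variable d : M -> M -> R.

Definition G_cost (A B : 'I_Q -> M) (s : 'S_Q) : R :=
  sqrt (\big[Rplus/0]_(i < Q) Rsqr (d (A i) (B (s i)))).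

Definition G_tuple (A B : 'I_Q -> M) : R :=
  \big[Rmin/G_cost A B 1%g]_(s : 'S_Q) G_cost A B s.

Definition AQ_dist (P P' : AQ) : R := G_tuple (AQ_rep P) (AQ_rep P').

End AQ.

Arguments AQ_dist {M} Q d P P'.

Definition DQ (X : Type) (rho : X -> X -> R) (mu : (X -> Prop) -> Rbar)
    (M : Type) (d : M -> M -> R) (Q : nat)
    (D : X -> (X -> Prop) -> (X -> M) -> Prop)
    (x0 : X) (B : X -> Prop) (F : X -> AQ M Q) : Prop :=
  germ_rep rho mu (AQ_dist Q d) x0 B F /\
  exists (B' : X -> Prop) (FF : X -> AQ M Q),
    germ_rep rho mu (AQ_dist Q d) x0 B' FF /\
    germ_equiv rho mu (AQ_dist Q d) x0 B F B' FF /\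
    exists (Bi : 'I_Q -> X -> Prop) (Fi : 'I_Q -> X -> M),
      (forall i, D x0 (Bi i) (Fi i)) /\
      (exists U, borel rho U /\ mu_nbhd rho mu x0 U /\
         (forall x, U x -> B' x /\ forall i, Bi i x) /\
         forall x, U x -> FF x = AQ_of (fun i => Fi i x)) /\
      (forall i j, Fi i x0 = Fi j x0 ->
         germ_equiv rho mu d x0 (Bi i) (Fi i) (Bi j) (Fi j)).

Arguments DQ {X} rho mu {M} d Q D x0 B F.

(* Let g : C -> A_Q(M) be L-Lipschitz on a closed set C. Near a point y0 of C where g takes
   k distinct values, the values of g at nearby points y with at most k distinct values
   cluster around those of g y0, exactly one value per cluster; selecting in each cluster
   splits g into Q Lipschitz branches h_i with g = sum_i [[h_i]] on a closed piece around y0.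
   Differentiable completeness of D makes every branch approximately D-differentiable at
   almost every point of the piece, and these D-germs assemble into a D^Q-germ of g.
   Countably many centres y0, taken from a dense sequence, cover C, and by Lebesgue's
   density theorem for the doubling measure almost every point of C is a density point of
   its level set, where the piece is a mu-neighbourhood of the point in C. *)

From Pilot Require Import Defs.
From Stdlib Require Import Reals Lra Classical ClassicalEpsilon.
From Stdlib Require Import FunctionalExtensionality PropExtensionality ProofIrrelevance.
From Coquelicot Require Import Rbar Lim_seq Lub.
From HB Require Import structures.
From mathcomp Require Import all_boot fingroup perm.

Set Implicit Arguments.
Unset Strict Implicit.
Unset Printing Implicit Defensive.
Local Open Scope R_scope.
Local Notation Fin := Rbar.Finite.

Lemma set_ext {T : Type} (A B : T -> Prop) : (forall x, A x <-> B x) -> A = B.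
Proof.
by move=> H; apply: functional_extensionality => x; apply: propositional_extensionality.
Qed.

Lemma Sup_seq_le_ub (u : nat -> Rbar) (l : Rbar) :
  (forall n, Rbar_le (u n) l) -> Rbar_le (Sup_seq u) l.
Proof.
move=> H; apply: (proj2 (is_sup_seq_lub _ _ (Sup_seq_correct u))) => _ [n ->].
exact: H.
Qed.

Fixpoint rpsum (a : nat -> R) (N : nat) : R :=
  match N with O => 0 | S N => rpsum a N + a N end.

Lemma Rbar_psum_Fin (a : nat -> R) (b : nat -> Rbar) N :
  (forall k, b k = Fin (a k)) -> Rbar_psum b N = Fin (rpsum a N).
Proof. by move=> H; elim: N => [|N IH] //=; rewrite IH H. Qed.

Lemma Rbar_psum0 (a : nat -> Rbar) N : (forall n, a n = Fin 0) -> Rbar_psum a N = Fin 0.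
Proof. by move=> H; elim: N => [|N IH] //=; rewrite IH H /= Rplus_0_r. Qed.

Lemma rpsum_le (a b : nat -> R) N : (forall k, a k <= b k) -> rpsum a N <= rpsum b N.
Proof. move=> H; elim: N => [|N IH] /=; first lra. have := H N; lra. Qed.

Lemma rpsumZ (a : nat -> R) c N : rpsum (fun k => c * a k) N = c * rpsum a N.
Proof. elim: N => [|N IH] /=; [ring|rewrite IH; ring]. Qed.

Lemma rpsum_ge_const (a : nat -> R) c N : (forall k, c <= a k) -> INR N * c <= rpsum a N.
Proof.
move=> H; elim: N => [|N IH]; first by rewrite /=; lra.
rewrite S_INR /=; have := H N; lra.
Qed.

Lemma INR_le_pow2 j : INR j <= 2 ^ j.
Proof.
elim: j => [|j IH]; first by rewrite /=; lra.
rewrite S_INR /=; have : 1 <= 2 ^ j by apply: pow_R1_Rle; lra.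
lra.
Qed.

Lemma INR_inv_lt (eps : R) : 0 < eps -> exists n : nat, / (INR n + 1) < eps.
Proof.
move=> He; case: (archimed_cor1 _ He) => n [Hn Hn0]; exists n.
apply: Rle_lt_trans Hn; apply: Rinv_le_contravar; first exact: lt_0_INR.
lra.
Qed.

Lemma INR_inv_gt0 n : 0 < / (INR n + 1).
Proof. by apply: Rinv_0_lt_compat; have := pos_INR n; lra. Qed.

Lemma exists_nat_mul_gt (a b : R) : 0 < a -> exists n : nat, b < INR n * a.
Proof.
move=> Ha; case: (Rle_lt_dec b 0) => Hb; first by exists 1%N; rewrite /=; lra.
have Hab : 0 < a / b by apply: Rdiv_lt_0_compat.
case: (INR_inv_lt Hab) => n Hn; exists n.+1; rewrite S_INR.
have Hn1 : 0 < INR n + 1 by have := pos_INR n; lra.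
have := Rmult_lt_compat_r (b * (INR n + 1)) _ _ (Rmult_lt_0_compat _ _ Hb Hn1) Hn.
have -> : / (INR n + 1) * (b * (INR n + 1)) = b by field; lra.
by have -> : a / b * (b * (INR n + 1)) = (INR n + 1) * a by field; lra.
Qed.

Lemma fun_choice (A B : Type) (P : A -> B -> Prop) :
  (forall a, exists b, P a b) -> exists f : A -> B, forall a, P a (f a).
Proof.
move=> H; exists (fun a => proj1_sig (constructive_indefinite_description _ (H a))) => a.
exact: proj2_sig.
Qed.

Section OuterMeasure.
Variables (T : Type) (mu : (T -> Prop) -> Rbar).
Hypothesis mu_om : outer_measure mu.

Lemma mu_set0 : mu (fun _ => False) = Fin 0.
Proof. by case: mu_om. Qed.

Lemma mu_ge0 A : Rbar_le (Fin 0) (mu A).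
Proof. by case: mu_om => _ []. Qed.

Lemma le_mu (A B : T -> Prop) : (forall x, A x -> B x) -> Rbar_le (mu A) (mu B).
Proof. by case: mu_om => _ [_ [H _]]; apply: H. Qed.

Lemma mu_bigcup_le (A : nat -> T -> Prop) :
  Rbar_le (mu (fun x => exists n, A n x)) (Sup_seq (Rbar_psum (fun n => mu (A n)))).
Proof. by case: mu_om => _ [_ [_ H]]; apply: H. Qed.

Lemma null_subset (A B : T -> Prop) :
  mu B = Fin 0 -> (forall x, A x -> B x) -> mu A = Fin 0.
Proof.
move=> HB HAB; apply: Rbar_le_antisym; last exact: mu_ge0.
rewrite -HB; exact: le_mu.
Qed.

Lemma mu_empty (A : T -> Prop) : (forall x, ~ A x) -> mu A = Fin 0.
Proof. by move=> H; apply: (null_subset mu_set0) => x /H. Qed.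

Lemma null_bigcup (A : nat -> T -> Prop) :
  (forall n, mu (A n) = Fin 0) -> mu (fun x => exists n, A n x) = Fin 0.
Proof.
move=> H; apply: Rbar_le_antisym; last exact: mu_ge0.
apply: Rbar_le_trans (mu_bigcup_le A) _; apply: Sup_seq_le_ub => n.
by rewrite Rbar_psum0 //; apply: Rle_refl.
Qed.

Lemma null_bigcup_ord (Q : nat) (A : 'I_Q -> T -> Prop) :
  (forall i, mu (A i) = Fin 0) -> mu (fun x => exists i, A i x) = Fin 0.
Proof.
move=> H.
apply: (null_subset (B := fun x => exists n, exists i : 'I_Q, i = n :> nat /\ A i x)).
  apply: null_bigcup => n; case: (ltnP n Q) => Hn.
  - apply: (null_subset (H (Ordinal Hn))) => x [i [Ei Ai]].
    by have -> : Ordinal Hn = i by apply: val_inj.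
  - by apply: mu_empty => x [i [Ei _]]; have := ltn_ord i; rewrite Ei ltnNge Hn.
by move=> x [i Ai]; exists (nat_of_ord i), i.
Qed.

Lemma mu_setU_le (A B : T -> Prop) :
  Rbar_le (mu (fun x => A x \/ B x)) (Rbar_plus (mu A) (mu B)).
Proof.
pose AB n := match n with 0 => A | 1 => B | _ => fun _ => False end.
have -> : (fun x => A x \/ B x) = (fun x => exists n, AB n x).
  apply: set_ext => x; split; first by case=> H; [exists 0%N|exists 1%N].
  by case=> [[|[|n]]] /=; auto.
apply: Rbar_le_trans (mu_bigcup_le _) _; apply: Sup_seq_le_ub => n.
have Hs k : Rbar_psum (fun n => mu (AB n)) k.+2 = Rbar_plus (mu A) (mu B).
  elim: k => [|k IH] /=; first by rewrite Rbar_plus_0_l.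
  by rewrite /= in IH; rewrite IH mu_set0 Rbar_plus_0_r.
case: n => [|[|n]].
- have := mu_ge0 A; have := mu_ge0 B.
  by case: (mu A) => [a| |]; case: (mu B) => [b| |] //= ? ?; lra.
- rewrite /= Rbar_plus_0_l -{1}(Rbar_plus_0_r (mu A)).
  apply: Rbar_plus_le_compat; [exact: Rbar_le_refl|exact: mu_ge0].
- rewrite Hs; exact: Rbar_le_refl.
Qed.

Lemma null_setU (A B : T -> Prop) :
  mu A = Fin 0 -> mu B = Fin 0 -> mu (fun x => A x \/ B x) = Fin 0.
Proof.
move=> HA HB; apply: Rbar_le_antisym; last exact: mu_ge0.
by have := mu_setU_le A B; rewrite HA HB /= Rplus_0_r.
Qed.

Lemma measurable_setC A : mu_measurable mu A -> mu_measurable mu (fun x => ~ A x).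
Proof.
move=> HA E; rewrite HA Rbar_plus_comm; do 2 f_equal.
by apply: set_ext => x; split; case=> Ex HAx; split=> //; tauto.
Qed.

Lemma measurable_setI A B : mu_measurable mu A -> mu_measurable mu B ->
  mu_measurable mu (fun x => A x /\ B x).
Proof.
move=> HA HB E.
rewrite (HA E) (HB (fun x => E x /\ A x)) (HA (fun x => E x /\ ~ (A x /\ B x))).
have -> : (fun x => (E x /\ A x) /\ B x) = (fun x => E x /\ A x /\ B x).
  by apply: set_ext => x; tauto.
have -> : (fun x => (E x /\ ~ (A x /\ B x)) /\ A x) = (fun x => (E x /\ A x) /\ ~ B x).
  by apply: set_ext => x; tauto.
have -> : (fun x => (E x /\ ~ (A x /\ B x)) /\ ~ A x) = (fun x => E x /\ ~ A x).
  by apply: set_ext => x; tauto.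
have := mu_ge0 (fun x => E x /\ A x /\ B x).
have := mu_ge0 (fun x => (E x /\ A x) /\ ~ B x); have := mu_ge0 (fun x => E x /\ ~ A x).
case: (mu _) => [a| |]; case: (mu _) => [b| |]; case: (mu _) => [c| |] //= *.
by f_equal; ring.
Qed.

Lemma null_measurable N : mu N = Fin 0 -> mu_measurable mu N.
Proof.
move=> HN E.
have EN : mu (fun x => E x /\ N x) = Fin 0 by apply: (null_subset HN) => x [].
rewrite EN Rbar_plus_0_l; apply: Rbar_le_antisym; last by apply: le_mu => x [].
have := mu_setU_le (fun x => E x /\ N x) (fun x => E x /\ ~ N x).
rewrite EN Rbar_plus_0_l; apply: Rbar_le_trans; apply: le_mu => x Ex.
by case: (classic (N x)); tauto.
Qed.

Lemma mu_disjoint_union_fin (S : nat -> T -> Prop) N :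
  (forall n, (n < N)%N -> mu_measurable mu (S n)) ->
  (forall n n' x, (n < N)%N -> (n' < N)%N -> n <> n' -> S n x -> S n' x -> False) ->
  mu (fun x => exists n, (n < N)%N /\ S n x) = Rbar_psum (fun n => mu (S n)) N.
Proof.
elim: N => [|N IH] HS Hd; first by apply: mu_empty => x [n []].
rewrite /= (HS N (ltnSn N)).
have -> : (fun x => (exists n, (n < N.+1)%N /\ S n x) /\ S N x) = S N.
  by apply: set_ext => x; split; [case|split=> //; exists N].
have -> : (fun x => (exists n, (n < N.+1)%N /\ S n x) /\ ~ S N x) =
          (fun x => exists n, (n < N)%N /\ S n x).
  apply: set_ext => x; split.
  - case=> [[n [Hn Sn]] NS]; exists n; split=> //.
    by move: Hn; rewrite ltnS leq_eqVlt => /orP [/eqP En|//]; subst.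
  - case=> n [Hn Sn]; split; first by exists n; split=> //; exact: ltnW.
    move=> SN; apply: (Hd n N x) => //; first exact: ltnW.
    by move=> En; subst; rewrite ltnn in Hn.
rewrite IH; first exact: Rbar_plus_comm.
- by move=> n Hn; apply: HS; exact: ltnW.
- by move=> n n' x Hn Hn'; apply: Hd; exact: ltnW.
Qed.

Lemma rpsum_mu_disjoint_le (S : nat -> T -> Prop) (W : T -> Prop) N :
  (forall n, mu_measurable mu (S n)) -> (forall n, mu (S n) = Fin (real (mu (S n)))) ->
  (forall n n' x, n <> n' -> S n x -> S n' x -> False) ->
  (forall n x, S n x -> W x) -> mu W = Fin (real (mu W)) ->
  rpsum (fun n => real (mu (S n))) N <= real (mu W).
Proof.
move=> Hm Hfin Hdisj HW HWfin.
have := le_mu (A := fun x => exists n, (n < N)%N /\ S n x) (B := W).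
rewrite HWfin mu_disjoint_union_fin; first last.
- by move=> n n' x _ _; exact: Hdisj.
- by move=> n _; exact: Hm.
by rewrite (Rbar_psum_Fin N Hfin); apply=> x [n [_ /HW]].
Qed.

End OuterMeasure.

Section Metric.
Variables (X : Type) (rho : X -> X -> R).
Hypothesis rho_metric : is_metric rho.

Lemma rho_ge0 x y : 0 <= rho x y. Proof. by case: rho_metric. Qed.
Lemma rho_sym x y : rho x y = rho y x. Proof. by case: rho_metric => _ [_ []]. Qed.
Lemma rho_tri x y z : rho x z <= rho x y + rho y z. Proof. by case: rho_metric => _ [_ [_]]. Qed.
Lemma rho_eq0 x y : rho x y = 0 <-> x = y. Proof. by case: rho_metric => _ []. Qed.
Lemma rho_xx x : rho x x = 0. Proof. exact/rho_eq0. Qed.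

Lemma rho_gt0 x y : x <> y -> 0 < rho x y.
Proof.
move=> Hxy; case: (Rle_lt_or_eq_dec _ _ (rho_ge0 x y)) => // E.
by case: Hxy; apply/rho_eq0.
Qed.

Lemma ball_open x r : is_open rho (ball rho x r).
Proof.
move=> y Hy; exists (r - rho y x); split; rewrite /ball in Hy *; first lra.
by move=> z; rewrite /ball; have := rho_tri z y x; lra.
Qed.

Lemma closed_ball_closed y0 r : is_closed rho (fun y => rho y y0 <= r).
Proof.
move=> x /Rnot_le_lt Hx; exists (rho x y0 - r); split; first lra.
move=> y; rewrite /ball; have := rho_tri x y y0; rewrite (rho_sym x y); lra.
Qed.

Lemma singleton_closed x : is_closed rho (fun y => y = x).
Proof.
move=> y Hy; exists (rho y x); split; first exact: rho_gt0.
by move=> z; rewrite /ball rho_sym => Hz Ez; subst z; lra.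
Qed.

Lemma borel_open U : is_open rho U -> borel rho U.
Proof. by move=> HU S _; apply. Qed.

Lemma borel_setC A : borel rho A -> borel rho (fun x => ~ A x).
Proof. by move=> HA S HS HO; have [_ [HC _]] := HS; apply: HC; exact: HA. Qed.

Lemma borel_bigcup (A : nat -> X -> Prop) :
  (forall n, borel rho (A n)) -> borel rho (fun x => exists n, A n x).
Proof. by move=> HA S HS HO; have [_ [_ HU]] := HS; apply: HU => n; exact: HA. Qed.

Lemma borel_set0 : borel rho (fun _ => False).
Proof. by move=> S []. Qed.

Lemma borel_setU A B : borel rho A -> borel rho B -> borel rho (fun x => A x \/ B x).
Proof.
move=> HA HB.
have -> : (fun x => A x \/ B x) =
          (fun x => exists n, (match n with 0 => A | 1 => B | _ => fun _ => False end) x).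
  apply: set_ext => x; split; first by case=> H; [exists 0%N|exists 1%N].
  by case=> [[|[|n]]] /=; auto.
by apply: borel_bigcup => [[|[|n]]] //; exact: borel_set0.
Qed.

Lemma borel_setI A B : borel rho A -> borel rho B -> borel rho (fun x => A x /\ B x).
Proof.
move=> HA HB.
have -> : (fun x => A x /\ B x) = (fun x => ~ (~ A x \/ ~ B x)).
  by apply: set_ext => x; split; [tauto|move=> H; split; apply: NNPP; tauto].
by apply: borel_setC; apply: borel_setU; exact: borel_setC.
Qed.

Lemma borel_setT : borel rho (fun _ => True).
Proof.
have -> : (fun _ : X => True) = (fun x => ~ False) by apply: set_ext; tauto.
apply: borel_setC; exact: borel_set0.
Qed.

Lemma borel_closed C : is_closed rho C -> borel rho C.
Proof.
move=> HC; have -> : C = (fun x => ~ ~ C x) by apply: set_ext => x; split; [tauto|apply: NNPP].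
apply: borel_setC; exact: borel_open.
Qed.

Lemma borel_ball x r : borel rho (ball rho x r).
Proof. apply: borel_open; exact: ball_open. Qed.

Lemma closed_setI (A B : X -> Prop) :
  is_closed rho A -> is_closed rho B -> is_closed rho (fun x => A x /\ B x).
Proof.
move=> HA HB x Hx; case: (classic (A x)) => Ax.
- have [r [Hr H]] : exists r, 0 < r /\ forall y, ball rho x r y -> ~ B y.
    by apply: HB => Bx; apply: Hx.
  by exists r; split=> // y /H NBy [].
- case: (HA x Ax) => r [Hr H]; exists r; split=> // y /H NAy [].
  by move/NAy.
Qed.

End Metric.

Section Doubling.
Variables (X : Type) (rho : X -> X -> R) (mu : (X -> Prop) -> Rbar) (K : R).
Hypothesis mu_doubling : doubling_mms rho mu K.

Local Notation mr A := (real (mu A)).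
Local Notation ball := (ball rho).

Lemma doubling_metric : is_metric rho. Proof. by case: mu_doubling => _ [[]]. Qed.
Lemma doubling_outer_measure : outer_measure mu. Proof. by case: mu_doubling => _ [_ [_ [[]]]]. Qed.
Lemma doubling_K_gt0 : 0 < K. Proof. by case: mu_doubling. Qed.
Lemma doubling_separable : separable rho. Proof. by case: mu_doubling => _ [_ []]. Qed.

Lemma borel_measurable A : borel rho A -> mu_measurable mu A.
Proof. by case: mu_doubling => _ [_ [_ [[_ [H _]] _]]]; apply: H. Qed.

Local Notation metric := doubling_metric.
Local Notation om := doubling_outer_measure.

Lemma mu_ball_finite x r : 0 < r -> mu (ball x r) = Fin (mr (ball x r)) /\ 0 < mr (ball x r).
Proof.
move=> Hr; case: mu_doubling => _ [_ [_ [_ H]]].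
have Hr2 : 0 < r / 2 by lra.
have [_ [_ Hfin]] := H x r Hr; have [Hpos _] := H x (r / 2) Hr2.
rewrite (_ : 2 * (r / 2) = r) in Hpos; last by field.
by case: (mu (ball x r)) Hfin Hpos.
Qed.

Lemma mu_ball_double x r : 0 < r -> mr (ball x (2 * r)) <= K * mr (ball x r).
Proof.
move=> Hr; case: mu_doubling => _ [_ [_ [_ H]]]; have [_ [H2 _]] := H x r Hr.
have [E1 _] := mu_ball_finite x Hr.
have Hr2 : 0 < 2 * r by lra.
have [E2 _] := mu_ball_finite x Hr2.
by rewrite E1 E2 in H2.
Qed.

Lemma mu_finite_subset A B : mu B = Fin (mr B) -> (forall x, A x -> B x) ->
  mu A = Fin (mr A) /\ 0 <= mr A <= mr B.
Proof.
move=> HB HAB; have H1 := le_mu om HAB; have H0 := mu_ge0 om A.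
by rewrite HB in H1; case: (mu A) H1 H0 => [a| |] //= ? ?; split=> //; split.
Qed.

Lemma mu_sub_ball A x r : 0 < r -> (forall y, A y -> ball x r y) ->
  mu A = Fin (mr A) /\ 0 <= mr A <= mr (ball x r).
Proof. by move=> Hr HA; apply: mu_finite_subset => //; case: (mu_ball_finite x Hr). Qed.

Lemma mu_ball_le x r y r' : 0 < r' -> (forall z, ball x r z -> ball y r' z) ->
  mr (ball x r) <= mr (ball y r').
Proof. by move=> Hr' H; have [_ [_ ?]] := mu_sub_ball Hr' H. Qed.

Definition density_point (x : X) (B : X -> Prop) : Prop :=
  forall eps, 0 < eps -> exists delta, 0 < delta /\
    forall r, 0 < r -> r < delta ->
      Rabs (mr (fun y => ball x r y /\ ~ B y) / mr (ball x r)) < eps.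

Lemma ball_ratio_ge0 A x r : 0 < r -> (forall y, A y -> ball x r y) ->
  0 <= mr A / mr (ball x r).
Proof.
move=> Hr HA; have [_ [H0 _]] := mu_sub_ball Hr HA; have [_ Hp] := mu_ball_finite x Hr.
exact: Rle_mult_inv_pos.
Qed.

Lemma mu_ball_setD_le x r B B' : 0 < r -> (forall y, B y -> B' y) ->
  mr (fun y => ball x r y /\ ~ B' y) <= mr (fun y => ball x r y /\ ~ B y).
Proof.
move=> Hr HBB.
have [E1 _] := mu_sub_ball (A := fun y => ball x r y /\ ~ B y) Hr (fun y H => proj1 H).
have [E2 _] := mu_sub_ball (A := fun y => ball x r y /\ ~ B' y) Hr (fun y H => proj1 H).
have := le_mu om (A := fun y => ball x r y /\ ~ B' y) (B := fun y => ball x r y /\ ~ B y).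
by rewrite E1 E2; apply=> y [Hy NB]; split=> // /HBB.
Qed.

Lemma density_point_mono x B B' : density_point x B -> (forall y, B y -> B' y) ->
  density_point x B'.
Proof.
move=> HB HBB eps He; case: (HB eps He) => dl [Hdl Hdl']; exists dl; split=> // r Hr Hrd.
have := Hdl' r Hr Hrd; have [_ Hp] := mu_ball_finite x Hr.
rewrite !Rabs_right; try by apply: Rle_ge; apply: ball_ratio_ge0 => // y [].
apply: Rle_lt_trans; apply: Rmult_le_compat_r; last exact: mu_ball_setD_le.
exact/Rlt_le/Rinv_0_lt_compat.
Qed.

Lemma density_pointI x B1 B2 : density_point x B1 -> density_point x B2 ->
  density_point x (fun y => B1 y /\ B2 y).
Proof.
move=> H1 H2 eps He.
have He2 : 0 < eps / 2 by lra.
case: (H1 _ He2) => d1 [Hd1 Hd1']; case: (H2 _ He2) => d2 [Hd2 Hd2'].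
exists (Rmin d1 d2); split; first exact: Rmin_glb_lt.
move=> r Hr Hrd.
have := Hd1' r Hr (Rlt_le_trans _ _ _ Hrd (Rmin_l _ _)).
have := Hd2' r Hr (Rlt_le_trans _ _ _ Hrd (Rmin_r _ _)).
rewrite !Rabs_right; try by apply: Rle_ge; apply: ball_ratio_ge0 => // y [].
set D1 := fun y => ball x r y /\ ~ B1 y; set D2 := fun y => ball x r y /\ ~ B2 y.
have [_ Hp] := mu_ball_finite x Hr.
have [E1 _] := mu_sub_ball (A := D1) Hr (fun y H => proj1 H).
have [E2 _] := mu_sub_ball (A := D2) Hr (fun y H => proj1 H).
have [E3 _] := mu_sub_ball (A := fun y => ball x r y /\ ~ (B1 y /\ B2 y)) Hr (fun y H => proj1 H).
have Hsub : Rbar_le (mu (fun y => ball x r y /\ ~ (B1 y /\ B2 y))) (Rbar_plus (mu D1) (mu D2)).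
  apply: Rbar_le_trans (mu_setU_le om D1 D2); apply: (le_mu om) => y [Hy NB].
  by rewrite /D1 /D2; case: (classic (B1 y)) => ?; [right|left]; split=> //; tauto.
rewrite E1 E2 E3 /= in Hsub; rewrite /Rdiv => Ha Hb.
have := Rmult_le_compat_r _ _ _ (Rlt_le _ _ (Rinv_0_lt_compat _ Hp)) Hsub; lra.
Qed.

Lemma density_point_open x U : is_open rho U -> U x -> density_point x U.
Proof.
move=> HU Ux eps He; case: (HU x Ux) => r0 [Hr0 Hb]; exists r0; split=> // r Hr Hrr.
rewrite (mu_empty om (A := fun y => ball x r y /\ ~ U y)).
  by rewrite /= /Rdiv Rmult_0_l Rabs_R0.
by move=> y [Hy]; apply; apply: Hb; rewrite /Defs.ball in Hy *; lra.
Qed.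

Lemma mu_nbhd_setT x : mu_nbhd rho mu x (fun _ => True).
Proof.
split=> //; exists (fun _ => True); split; first exact: borel_setT.
split=> //; apply: density_point_open => //.
by move=> y _; exists 1; split=> //; lra.
Qed.

Lemma mu_nbhdI x U V : mu_nbhd rho mu x U -> mu_nbhd rho mu x V ->
  mu_nbhd rho mu x (fun y => U y /\ V y).
Proof.
move=> [HU [B1 [HB1 [HB1U HD1]]]] [HV [B2 [HB2 [HB2V HD2]]]].
split=> //; exists (fun y => B1 y /\ B2 y); split; first exact: borel_setI.
by split; [move=> y [? ?]; split; auto|exact: density_pointI].
Qed.

Lemma mu_nbhd_mono x U V : mu_nbhd rho mu x U -> (forall y, U y -> V y) -> mu_nbhd rho mu x V.
Proof.
move=> [HU [B [HB [HBU HD]]]] HUV; split; first by auto.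
by exists B; split=> //; split=> // y /HBU /HUV.
Qed.

Lemma mu_nbhd_bigI (I : finType) x (U : I -> X -> Prop) :
  (forall i, mu_nbhd rho mu x (U i)) -> mu_nbhd rho mu x (fun y => forall i, U i y).
Proof.
move=> HU.
have H (l : seq I) : mu_nbhd rho mu x (fun y => forall i, i \in l -> U i y).
  elim: l => [|a l IH].
  - by apply: mu_nbhd_mono (mu_nbhd_setT x) _ => y _ i; rewrite in_nil.
  - apply: mu_nbhd_mono (mu_nbhdI (HU a) IH) _ => y [Ha Hl] i.
    by rewrite inE => /orP [/eqP ->|/Hl].
by apply: mu_nbhd_mono (H (enum I)) _ => y Hy i; apply: Hy; rewrite mem_enum.
Qed.

Lemma mu_nbhd_borel x U : mu_nbhd rho mu x U ->
  exists W, borel rho W /\ mu_nbhd rho mu x W /\ (forall y, W y -> U y).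
Proof.
move=> [HU [B [HB [HBU HD]]]]; exists (fun y => y = x \/ B y); split.
  by apply: borel_setU => //; apply: borel_closed; exact: singleton_closed metric x.
split; last by move=> y [->|/HBU].
split; first by left.
by exists B; split=> //; split=> // y By; right.
Qed.

Lemma germ_equiv_refl (N : Type) (e : N -> N -> R) x B (F : X -> N) :
  (forall p, e p p = 0) -> germ_equiv rho mu e x B F B F.
Proof.
move=> He; split=> // eps Heps; exists (fun _ => True); split; first exact: mu_nbhd_setT.
by move=> y _ _ _; rewrite He /Rdiv Rmult_0_l Rminus_0_r Rabs_R0.
Qed.

End Doubling.

Section GreedySelection.
Variables (X : Type) (rho : X -> X -> R).
Hypothesis rho_metric : is_metric rho.
Variables (E : X -> Prop) (rad : X -> R).
Hypothesis rad_range : forall x, E x -> 0 < rad x <= 1.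

Definition balls_meet (x y : X) := exists z, ball rho x (rad x) z /\ ball rho y (rad y) z.

Definition available (l : list X) (y : X) := E y /\ forall x, List.In x l -> ~ balls_meet x y.

(* Radii are bounded, so some available center has radius more than half the supremum. *)
Lemma greedy_pick_spec l : (exists y, available l y) ->
  exists y, available l y /\ forall y', available l y' -> rad y' < 2 * rad y.
Proof.
move=> [y0 Hy0]; pose S r := exists y, available l y /\ r = rad y.
have Hb : bound S by exists 1 => r [y [[Ey _] ->]]; case: (rad_range Ey).
case: (completeness S Hb (ex_intro _ (rad y0) (ex_intro _ y0 (conj Hy0 erefl)))).
move=> m [Hub Hlub].
have Hy0p : 0 < rad y0 by case: Hy0 => /rad_range [].
have Hm0 : rad y0 <= m by apply: Hub; exists y0.
apply: NNPP => Hno; suff : m <= m / 2 by lra.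
apply: Hlub => r [y [Hy ->]]; apply: Rnot_lt_le => Hlt; apply: Hno; exists y; split=> //.
move=> y' Hy'; have : rad y' <= m by apply: Hub; exists y'.
lra.
Qed.

Definition greedy_pick (l : list X) : option X :=
  match excluded_middle_informative (exists y, available l y) with
  | left H => Some (proj1_sig (constructive_indefinite_description _ (greedy_pick_spec H)))
  | right _ => None
  end.

Lemma greedy_pick_some l x : greedy_pick l = Some x ->
  available l x /\ forall y', available l y' -> rad y' < 2 * rad x.
Proof.
rewrite /greedy_pick; case: excluded_middle_informative => // H [<-].
exact: (proj2_sig (constructive_indefinite_description _ (greedy_pick_spec H))).
Qed.

Lemma greedy_pick_none l : greedy_pick l = None -> forall y, ~ available l y.
Proof.
by rewrite /greedy_pick; case: excluded_middle_informative => // H _ y Hy; apply: H; exists y.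
Qed.

Fixpoint greedy_list (n : nat) : list X :=
  match n with
  | O => nil
  | S n => match greedy_pick (greedy_list n) with
           | Some x => x :: greedy_list n
           | None => greedy_list n
           end
  end.

Definition greedy_sel n := greedy_pick (greedy_list n).

Lemma greedy_list_mono n k x : List.In x (greedy_list n) -> List.In x (greedy_list (n + k)).
Proof.
elim: k => [|k IH]; first by rewrite addn0.
by rewrite addnS /=; case: (greedy_pick _) => [y|] Hx; [right|]; exact: IH.
Qed.

Lemma greedy_sel_in_list k x : greedy_sel k = Some x -> List.In x (greedy_list k.+1).
Proof. by rewrite /greedy_sel /= => ->; left. Qed.

Lemma balls_meet_sym x y : balls_meet x y -> balls_meet y x.
Proof. by case=> z [H1 H2]; exists z. Qed.

Lemma greedy_sel_disjoint k k' x x' :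
  greedy_sel k = Some x -> greedy_sel k' = Some x' -> k <> k' -> ~ balls_meet x x'.
Proof.
wlog: k k' x x' / (k < k')%N.
  move=> W H1 H2 Hne; case: (ltngtP k k') => Hk; [exact: W H1 H2 Hne| |by []].
  by move=> /balls_meet_sym; apply: (W k' k x' x Hk H2 H1); auto.
move=> Hk H1 H2 _; have [[_ Hav] _] := greedy_pick_some H2; apply: Hav.
by have := greedy_list_mono (k' - k.+1) (greedy_sel_in_list H1); rewrite subnKC.
Qed.

Lemma greedy_sel_in k x : greedy_sel k = Some x -> E x.
Proof. by move=> /greedy_pick_some [[]]. Qed.

(* If the ball of [y] meets that of a selected [x] while [rad y < 2 * rad x], then
   [y] lies in the ball of [x] of triple radius. *)
Lemma greedy_cover y : E y ->
  (forall n, available (greedy_list n) y) \/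
  exists k x, greedy_sel k = Some x /\ rho y x < 3 * rad x.
Proof.
move=> Ey.
suff H n : available (greedy_list n) y \/
           exists k x, greedy_sel k = Some x /\ rho y x < 3 * rad x.
  case: (classic (exists n, ~ available (greedy_list n) y)) => [[n Hn]|Hn].
  - by case: (H n) => [/Hn|]; [|right].
  - by left => n; apply: NNPP => Hc; apply: Hn; exists n.
elim: n => [|n IH]; first by left.
case: IH => [Hav|]; last by right.
case Hs: (greedy_sel n) => [x|]; last by case: (greedy_pick_none Hs Hav).
have [_ Hx] := greedy_pick_some Hs; have Hlt := Hx y Hav.
case: (classic (balls_meet x y)) => [[z [Hz1 Hz2]]|Hm].
- right; exists n, x; split=> //; rewrite /ball in Hz1 Hz2.
  by have := rho_tri rho_metric y z x; rewrite (rho_sym rho_metric y z); lra.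
- left; rewrite /= -/(greedy_sel n) Hs; split; first by case: Hav.
  by move=> x' [<-|Hx'] //; case: Hav => _ /(_ x' Hx').
Qed.

Lemma greedy_forever y : E y -> (forall n, available (greedy_list n) y) ->
  exists f : nat -> X, forall n, greedy_sel n = Some (f n) /\ rad y < 2 * rad (f n).
Proof.
move=> Ey Hall.
have Hs n : exists x, greedy_sel n = Some x /\ rad y < 2 * rad x.
  case Hsn: (greedy_sel n) => [x|]; last by case: (greedy_pick_none Hsn (Hall n)).
  by exists x; split=> //; apply: (proj2 (greedy_pick_some Hsn)).
exists (fun n => proj1_sig (constructive_indefinite_description _ (Hs n))) => n.
exact: (proj2_sig (constructive_indefinite_description _ (Hs n))).
Qed.

End GreedySelection.

Section DensityTheorem.
Variables (X : Type) (rho : X -> X -> R) (mu : (X -> Prop) -> Rbar) (K : R).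
Hypothesis mu_doubling : doubling_mms rho mu K.

Local Notation mr A := (real (mu A)).
Local Notation ball := (ball rho).
Local Notation metric := (doubling_metric mu_doubling).
Local Notation om := (doubling_outer_measure mu_doubling).
Local Notation K_gt0 := (doubling_K_gt0 mu_doubling).

Lemma mu_ball_iter x j r : 0 < r -> mr (ball x (2 ^ j * r)) <= K ^ j * mr (ball x r).
Proof.
move=> Hr; elim: j => [|j IH] /=; first by rewrite !Rmult_1_l; exact: Rle_refl.
have Hp : 0 < 2 ^ j * r by apply: Rmult_lt_0_compat => //; apply: pow_lt; lra.
rewrite Rmult_assoc; apply: Rle_trans (mu_ball_double mu_doubling x Hp) _.
by rewrite Rmult_assoc; apply: Rmult_le_compat_l => //; exact: Rlt_le K_gt0.
Qed.

Lemma mu_ball_lower_bound o m r0 : 0 < m -> 0 < r0 ->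
  exists c, 0 < c /\ forall x, rho x o < m -> c <= mr (ball x r0).
Proof.
move=> Hm Hr0; case: (exists_nat_mul_gt (2 * m) Hr0) => j Hj.
have HKj : 0 < K ^ j by apply: pow_lt; exact: K_gt0.
have [_ Hom] := mu_ball_finite mu_doubling o Hm.
exists (mr (ball o m) / K ^ j); split; first exact: Rdiv_lt_0_compat.
move=> x Hx; apply: (Rmult_le_reg_l (K ^ j)) => //.
rewrite /Rdiv Rmult_comm Rmult_assoc Rinv_l; last lra.
rewrite Rmult_1_r; apply: Rle_trans (mu_ball_iter x j Hr0).
apply: (mu_ball_le mu_doubling); first by apply: Rmult_lt_0_compat => //; apply: pow_lt; lra.
move=> z; rewrite /Defs.ball; have := rho_tri metric z o x; rewrite (rho_sym metric o x).
by have := INR_le_pow2 j; have := Rmult_le_compat_r r0 _ _ (Rlt_le _ _ Hr0) (INR_le_pow2 j); lra.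
Qed.

(* Each of the disjoint balls has measure at least [c > 0] and they all lie in one ball. *)
Lemma no_infinite_disjoint_balls o m r (x : nat -> X) (rad : nat -> R) :
  0 < m -> 0 < r -> (forall n, rho (x n) o < m /\ r <= rad n <= 1) ->
  ~ (forall n n' z, n <> n' -> ball (x n) (rad n) z -> ~ ball (x n') (rad n') z).
Proof.
move=> Hm Hr Hx Hdisj.
case: (mu_ball_lower_bound o Hm Hr) => c [Hc Hcl].
have Hm1 : 0 < m + 1 by lra.
have [Eb _] := mu_ball_finite mu_doubling o Hm1.
have HS n : mu (ball (x n) (rad n)) = Fin (mr (ball (x n) (rad n))) /\
            c <= mr (ball (x n) (rad n)).
  have [Hxn Hrn] := Hx n; have Hrn0 : 0 < rad n by lra.
  split; first exact: (proj1 (mu_ball_finite mu_doubling (x n) Hrn0)).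
  apply: Rle_trans (Hcl _ Hxn) _; apply: (mu_ball_le mu_doubling) => // z; rewrite /Defs.ball; lra.
have Hbd N : INR N * c <= mr (ball o (m + 1)).
  apply: Rle_trans (rpsum_ge_const N (fun k => proj2 (HS k))) _.
  apply: (rpsum_mu_disjoint_le om); last exact: Eb.
  - by move=> n; apply: (borel_measurable mu_doubling); exact: (borel_ball metric).
  - by move=> n; case: (HS n).
  - by move=> n n' z Hnn' H1 H2; apply: (Hdisj n n' z).
  - move=> n z Hz; rewrite /Defs.ball in Hz *; have [Hxn Hrn] := Hx n.
    by have := rho_tri metric z (x n) o; lra.
case: (exists_nat_mul_gt (mr (ball o (m + 1))) Hc) => N HN.
by have := Hbd N; lra.
Qed.

Definition low_density_set (A : X -> Prop) (o : X) (m t : R) (x : X) : Prop :=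
  A x /\ rho x o < m /\ forall delta, 0 < delta -> exists r, 0 < r /\ r < delta /\
    t * mr (ball x r) <= mr (fun y => ball x r y /\ ~ A y).

Definition outer_layer (A : X -> Prop) (o : X) (m delta : R) (y : X) : Prop :=
  rho y o < m + 1 /\ ~ A y /\ exists a, A a /\ rho y a < delta.

Lemma mu_triple_ball_le A x r t : 0 < r -> 0 < t ->
  t * mr (ball x r) <= mr (fun y => ball x r y /\ ~ A y) ->
  mr (ball x (3 * r)) <= K * K / t * mr (fun y => ball x r y /\ ~ A y).
Proof.
move=> Hr Ht Hrat; have HK := K_gt0; have Hr2 : 0 < 2 * r by lra.
have H4 : mr (ball x (3 * r)) <= mr (ball x (2 * (2 * r))).
  by apply: (mu_ball_le mu_doubling); first lra; move=> z; rewrite /Defs.ball; lra.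
have H5 := mu_ball_double mu_doubling x Hr2; have H6 := mu_ball_double mu_doubling x Hr.
have H7 : mr (ball x r) <= / t * mr (fun z => ball x r z /\ ~ A z).
  by apply: (Rmult_le_reg_l t) => //; rewrite -Rmult_assoc Rinv_r; lra.
have H8 : K * mr (ball x (2 * r)) <= K * (K * mr (ball x r)) by apply: Rmult_le_compat_l; lra.
have H9 : K * K * mr (ball x r) <= K * K * (/ t * mr (fun z => ball x r z /\ ~ A z)).
  by apply: Rmult_le_compat_l => //; apply: Rmult_le_pos; lra.
rewrite /Rdiv; lra.
Qed.

Lemma greedy_triples_cover (E : X -> Prop) (rad : X -> R)
    (rad_range : forall x, E x -> 0 < rad x <= 1) o m :
  0 < m -> (forall x, E x -> rho x o < m) ->
  forall y, E y -> exists k x, greedy_sel rho rad_range k = Some x /\ rho y x < 3 * rad x.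
Proof.
move=> Hm HE y Ey; case: (greedy_cover metric rad_range Ey) => // Hall.
case: (greedy_forever Ey Hall) => f Hf; exfalso.
have Hry : 0 < rad y / 2 by have := rad_range y Ey; lra.
apply: (no_infinite_disjoint_balls (o := o) (x := f) (rad := fun n => rad (f n)) Hm Hry).
- move=> n; have [Hn Hlt] := Hf n; have Ef := greedy_sel_in Hn.
  by have := rad_range _ Ef; have := HE _ Ef; split=> //; split; lra.
- move=> n n' z Hnn' H1 H2.
  by apply: (greedy_sel_disjoint (proj1 (Hf n)) (proj1 (Hf n')) Hnn'); exists z.
Qed.

Lemma low_density_radius A o m t delta : 0 < delta -> exists rad : X -> R,
  forall x, low_density_set A o m t x -> 0 < rad x /\ rad x < delta /\
    t * mr (ball x (rad x)) <= mr (fun y => ball x (rad x) y /\ ~ A y).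
Proof.
move=> Hdl; apply: (fun_choice (P := fun x r => low_density_set A o m t x -> 0 < r /\ r < delta /\
    t * mr (ball x r) <= mr (fun y => ball x r y /\ ~ A y))) => x.
case: (classic (low_density_set A o m t x)) => [[_ [_ H]]|Hx]; last by exists 0.
by case: (H _ Hdl) => r Hr; exists r.
Qed.

(* The greedily selected balls are disjoint, their parts outside [A] lie in the outer layer,
   and their triples cover the low density set. *)
Lemma low_density_set_le_layer A o m t delta :
  is_closed rho A -> 0 < m -> 0 < t -> 0 < delta -> delta <= 1 ->
  Rbar_le (mu (low_density_set A o m t)) (Fin (K * K / t * mr (outer_layer A o m delta))).
Proof.
move=> HA Hm Ht Hdl Hd1; set E := low_density_set A o m t.
have [rad Hrad] := low_density_radius A o m t Hdl.
have Hrad1 x : E x -> 0 < rad x <= 1 by move=> /Hrad [? [? _]]; split; lra.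
pose S3 k z := match greedy_sel rho Hrad1 k with Some x => ball x (3 * rad x) z | None => False end.
pose S1A k z := match greedy_sel rho Hrad1 k with
  | Some x => ball x (rad x) z /\ ~ A z | None => False end.
have Hcov y : E y -> exists k, S3 k y.
  move=> Ey; have [k [x [Hk Hyx]]] :=
    greedy_triples_cover Hrad1 Hm (fun x Ex => proj1 (proj2 Ex)) Ey.
  by exists k; rewrite /S3 Hk.
have HS k : (mu (S3 k) = Fin (mr (S3 k)) /\ mu (S1A k) = Fin (mr (S1A k))) /\
            mr (S3 k) <= K * K / t * mr (S1A k).
  rewrite /S3 /S1A; case Hk: (greedy_sel rho Hrad1 k) => [x|]; last first.
    by rewrite (mu_set0 om) /= Rmult_0_r; split=> //; exact: Rle_refl.
  have [Hp [_ Hrat]] := Hrad x (greedy_sel_in Hk); have Hp3 : 0 < 3 * rad x by lra.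
  split; last exact: mu_triple_ball_le.
  split; first exact: (proj1 (mu_ball_finite mu_doubling x Hp3)).
  exact: (proj1 (mu_sub_ball mu_doubling Hp (fun z Hz => proj1 Hz))).
apply: Rbar_le_trans (le_mu om (B := fun y => exists k, S3 k y) Hcov) _.
apply: Rbar_le_trans (mu_bigcup_le om S3) _; apply: Sup_seq_le_ub => N.
rewrite (Rbar_psum_Fin (a := fun k => mr (S3 k))) /=; last by move=> k; case: (HS k) => [[]].
apply: Rle_trans (rpsum_le N (fun k => proj2 (HS k))) _.
rewrite rpsumZ; apply: Rmult_le_compat_l.
  by rewrite /Rdiv; apply: Rmult_le_pos; [nra|apply/Rlt_le/Rinv_0_lt_compat].
have Hm1 : 0 < m + 1 by lra.
apply: (rpsum_mu_disjoint_le om).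
- move=> n; rewrite /S1A; case: (greedy_sel rho Hrad1 n) => [x|] /=.
  + apply: (borel_measurable mu_doubling); apply: (borel_setI (borel_ball metric x _)).
    by apply: borel_setC; apply: borel_closed.
  + by apply: (null_measurable om); exact: (mu_set0 om).
- by move=> k; case: (HS k) => [[]].
- move=> n n' z Hnn'; rewrite /S1A.
  case Hn: (greedy_sel rho Hrad1 n) => [y|] //.
  case Hn': (greedy_sel rho Hrad1 n') => [y'|] // [H1 _] [H2 _].
  by apply: (greedy_sel_disjoint Hn Hn' Hnn'); exists z.
- move=> n z; rewrite /S1A; case Hk: (greedy_sel rho Hrad1 n) => [x|] // [Hz NA].
  have Ex := greedy_sel_in Hk; have [Hp [Hpd _]] := Hrad x Ex; case: Ex => Ax [Hxo _].
  rewrite /Defs.ball in Hz; split; first by have := rho_tri metric z x o; lra.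
  by split=> //; exists x; split=> //; lra.
- exact: (proj1 (mu_sub_ball mu_doubling Hm1 (fun y H => proj1 H))).
Qed.

Lemma mu_decreasing_small (W : nat -> X -> Prop) :
  (forall j, mu_measurable mu (W j)) -> (forall j y, W j.+1 y -> W j y) ->
  (forall y, ~ forall j, W j y) -> mu (W 0%N) = Fin (mr (W 0%N)) ->
  forall a, 0 < a -> exists j, mr (W j) < a.
Proof.
move=> Hm Hdec Hemp Hfin a Ha; apply: NNPP => Hno.
have Hge j : a <= mr (W j) by apply: Rnot_lt_le => H; apply: Hno; exists j.
have Hsub0 j y : W j y -> W 0%N y by elim: j y => [|j IH] y // /Hdec /IH.
have Hf j : mu (W j) = Fin (mr (W j)) by case: (mu_finite_subset mu_doubling Hfin (Hsub0 j)).
pose Z i y := W i y /\ ~ W i.+1 y.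
have HZ i : mu (Z i) = Fin (mr (W i) - mr (W i.+1)).
  have H := Hm i.+1 (W i).
  have E2 : (fun x => W i x /\ W i.+1 x) = W i.+1.
    by apply: set_ext => x; split; [case|move=> H'; split=> //; exact: Hdec].
  have [E3 _] := mu_finite_subset mu_doubling (Hf i) (A := Z i) (fun x Hx => proj1 Hx).
  rewrite /Z in E3 *; rewrite E2 (Hf i) (Hf i.+1) E3 in H.
  by rewrite E3; case: H => H; f_equal; lra.
have Hcov y : W 0%N y -> exists i, Z i y.
  move=> Hy; apply: NNPP => Hn; apply: (Hemp y) => j; apply: NNPP => Hj.
  elim: j Hj => [//|j IH] Hj; case: (classic (W j y)) => Hw; last exact: IH.
  by apply: Hn; exists j.
have Hps N : Rbar_psum (fun n => mu (Z n)) N = Fin (mr (W 0%N) - mr (W N)).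
  by elim: N => [|N IH] /=; [f_equal; ring|rewrite IH HZ /=; f_equal; ring].
suff : Rbar_le (mu (W 0%N)) (Fin (mr (W 0%N) - a)) by rewrite Hfin /=; lra.
apply: Rbar_le_trans (le_mu om Hcov) _; apply: Rbar_le_trans (mu_bigcup_le om Z) _.
by apply: Sup_seq_le_ub => N; rewrite Hps /=; have := Hge N; lra.
Qed.

Lemma open_thickening (A : X -> Prop) delta :
  is_open rho (fun y => exists a, A a /\ rho y a < delta).
Proof.
move=> y [a [Aa Hya]]; exists (delta - rho y a); split; first lra.
move=> z Hz; exists a; split=> //; rewrite /Defs.ball in Hz.
by have := rho_tri metric z y a; lra.
Qed.

Lemma outer_layer_small A o m a : is_closed rho A -> 0 < m -> 0 < a ->
  exists j, mr (outer_layer A o m (/ (INR j + 1))) < a.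
Proof.
move=> HA Hm Ha; pose W j := outer_layer A o m (/ (INR j + 1)).
have Hm1 : 0 < m + 1 by lra.
apply: (mu_decreasing_small (W := W)) => //.
- move=> j; apply: (borel_measurable mu_doubling).
  apply: borel_setI; first exact: borel_ball metric o _.
  apply: borel_setI; first by apply: borel_setC; apply: borel_closed.
  by apply: borel_open; exact: open_thickening.
- move=> j y [H1 [H2 [b [Ab Hb]]]]; split=> //; split=> //; exists b; split=> //.
  apply: Rlt_le_trans Hb _; apply: Rinv_le_contravar; first by have := pos_INR j; lra.
  by rewrite S_INR; lra.
- move=> y Hall; case: (Hall 0%N) => [_ [NAy _]]; case: (HA y NAy) => r [Hr Hball].
  case: (INR_inv_lt Hr) => n Hn; case: (Hall n) => [_ [_ [b [Ab Hyb]]]].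
  by apply: (Hball b) => //; rewrite /Defs.ball (rho_sym metric); lra.
- exact: (proj1 (mu_sub_ball mu_doubling (A := W 0%N) Hm1 (fun y Hy => proj1 Hy))).
Qed.

(* Each outer layer has measure at least [t / K^2] times that of the low density set. *)
Lemma low_density_set_null A o m t : is_closed rho A -> 0 < m -> 0 < t ->
  mu (low_density_set A o m t) = Fin 0.
Proof.
move=> HA Hm Ht; have HK := K_gt0; set E := low_density_set A o m t.
have [HEfin [HE0 _]] := mu_sub_ball mu_doubling (A := E) Hm (fun y Hy => proj1 (proj2 Hy)).
rewrite HEfin; f_equal; apply: Rle_antisym => //; apply: Rnot_lt_le => Hpos.
have Hc : 0 < t / (K * K) * mr E.
  by apply: Rmult_lt_0_compat => //; apply: Rdiv_lt_0_compat => //; nra.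
case: (outer_layer_small o HA Hm Hc) => j HWj.
have Hdj : / (INR j + 1) <= 1.
  by rewrite -Rinv_1; apply: Rinv_le_contravar; [lra|have := pos_INR j; lra].
have := low_density_set_le_layer o HA Hm Ht (INR_inv_gt0 j) Hdj; rewrite HEfin /= => Hb.
have HKK : 0 < K * K / t by apply: Rdiv_lt_0_compat => //; nra.
have := Rmult_lt_compat_l _ _ _ HKK HWj.
have -> : K * K / t * (t / (K * K) * mr E) = mr E by field; split; lra.
lra.
Qed.

Theorem density_point_ae A : is_closed rho A ->
  mu (fun x => A x /\ ~ density_point rho mu x A) = Fin 0.
Proof.
move=> HA; case: (classic (exists x, A x /\ ~ density_point rho mu x A)) => [[o _]|Hne]; last first.
  by apply: (mu_empty om) => x Hx; apply: Hne; exists x.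
apply: (null_subset om
  (B := fun x => exists n k, low_density_set A o (INR k + 1) (/ (INR n + 1)) x)).
  apply: (null_bigcup om) => n; apply: (null_bigcup om) => k.
  by apply: low_density_set_null => //; [have := pos_INR k; lra|exact: INR_inv_gt0].
move=> x [Ax Hnd].
have [eps [He Heps]] : exists eps, 0 < eps /\ forall delta, 0 < delta ->
    exists r, 0 < r /\ r < delta /\
      eps <= mr (fun y => ball x r y /\ ~ A y) / mr (ball x r).
  apply: NNPP => Hc; apply: Hnd => eps He; apply: NNPP => Hc2; apply: Hc.
  exists eps; split=> // delta Hdl; apply: NNPP => Hc3; apply: Hc2.
  exists delta; split=> // r Hr Hrd.
  rewrite Rabs_right; last by apply: Rle_ge; apply: (ball_ratio_ge0 mu_doubling Hr) => y [].
  by apply: Rnot_le_lt => Hle; apply: Hc3; exists r.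
case: (INR_inv_lt He) => n Hn.
case: (exists_nat_mul_gt (rho x o) Rlt_0_1) => k Hk.
exists n, k; split=> //; split; first by lra.
move=> delta Hdl; case: (Heps _ Hdl) => r [Hr [Hrd Hrat]]; exists r; split=> //; split=> //.
have [_ Hbp] := mu_ball_finite mu_doubling x Hr.
have := Rmult_le_compat_r _ _ _ (Rlt_le _ _ Hbp) (Rle_trans _ _ _ (Rlt_le _ _ Hn) Hrat).
by rewrite /Rdiv Rmult_assoc Rinv_l ?Rmult_1_r //; lra.
Qed.

End DensityTheorem.

Lemma R_addA : associative Rplus. Proof. by move=> a b c; ring. Qed.
Lemma R_addC : commutative Rplus. Proof. by move=> a b; ring. Qed.
Lemma R_add0 : left_id 0 Rplus. Proof. by move=> a; ring. Qed.
HB.instance Definition _ := Monoid.isComLaw.Build R 0 Rplus R_addA R_addC R_add0.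

Lemma bigmin_ind (I : finType) (F : I -> R) x0 (P : R -> Prop) :
  P x0 -> (forall i, P (F i)) -> P (\big[Rmin/x0]_(j : I) F j).
Proof. by move=> H0 HF; apply: big_ind => // a b Ha Hb; rewrite /Rmin; case: Rle_dec. Qed.

Lemma bigmin_le (I : finType) (F : I -> R) x0 i : \big[Rmin/x0]_(j : I) F j <= F i.
Proof.
rewrite /index_enum; have : i \in Finite.enum I by rewrite -enumT mem_enum.
elim: (Finite.enum I) => [|a s IH] //; rewrite big_cons inE => /orP [/eqP <-|/IH H].
- exact: Rmin_l.
- exact: Rle_trans (Rmin_r _ _) H.
Qed.

Lemma bigmin_le_idx (I : finType) (F : I -> R) x0 : \big[Rmin/x0]_(j : I) F j <= x0.
Proof.
rewrite /index_enum; elim: (Finite.enum I) => [|a s IH]; first by rewrite big_nil; exact: Rle_refl.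
by rewrite big_cons; apply: Rle_trans IH; exact: Rmin_r.
Qed.

Lemma bigmin_attained (I : finType) (F : I -> R) x0 :
  \big[Rmin/x0]_(j : I) F j = x0 \/ exists i, \big[Rmin/x0]_(j : I) F j = F i.
Proof.
by apply: (bigmin_ind (P := fun y => y = x0 \/ exists i, y = F i)); [left|right; exists i].
Qed.

Lemma sumR_ge0 (I : finType) (P : pred I) (F : I -> R) :
  (forall i, 0 <= F i) -> 0 <= \big[Rplus/0]_(j | P j) F j.
Proof. by move=> H; apply: big_ind => //; [exact: Rle_refl|move=> a b ? ?; lra]. Qed.

Lemma sumR_le (I : finType) (F G : I -> R) : (forall i, F i <= G i) ->
  \big[Rplus/0]_(j : I) F j <= \big[Rplus/0]_(j : I) G j.
Proof.
by move=> H; apply: (big_ind2 (fun a b => a <= b)) => //; [exact: Rle_refl|move=> *; lra].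
Qed.

Lemma sumR_ge_term (I : finType) (F : I -> R) i :
  (forall j, 0 <= F j) -> F i <= \big[Rplus/0]_(j : I) F j.
Proof. by move=> H; rewrite (bigD1 i) //=; have := sumR_ge0 (fun j => j != i) H; lra. Qed.

Lemma sumR_le_const n (F : 'I_n -> R) c : (forall i, F i <= c) ->
  \big[Rplus/0]_(j < n) F j <= INR n * c.
Proof.
move=> H; apply: Rle_trans (sumR_le H) _; rewrite big_const_ord.
by elim: n {F H} => [|n IH]; [rewrite /=; lra|rewrite S_INR /=; lra].
Qed.

Section AQMetric.
Variables (M : Type) (d : M -> M -> R) (Q : nat).
Hypothesis d_metric : is_metric d.

Lemma G_cost_ge_term (A B : 'I_Q -> M) (s : 'S_Q) i : d (A i) (B (s i)) <= G_cost d A B s.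
Proof.
have H0 := rho_ge0 d_metric (A i) (B (s i)).
rewrite /G_cost -{1}(sqrt_Rsqr _ H0); apply: sqrt_le_1_alt.
by apply: (sumR_ge_term (F := fun j => Rsqr (d (A j) (B (s j))))) => j; exact: Rle_0_sqr.
Qed.

Lemma G_tuple_le (A B : 'I_Q -> M) (s : 'S_Q) : G_tuple d A B <= G_cost d A B s.
Proof. exact: bigmin_le. Qed.

Lemma G_tuple_attained (A B : 'I_Q -> M) : exists s, G_tuple d A B = G_cost d A B s.
Proof.
rewrite /G_tuple.
by case: (bigmin_attained (fun s => G_cost d A B s) (G_cost d A B 1%g)) => [->|[s ->]]; eexists.
Qed.

Lemma G_tuple_ge0 (A B : 'I_Q -> M) : 0 <= G_tuple d A B.
Proof. by case: (G_tuple_attained A B) => s ->; exact: sqrt_pos. Qed.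

Lemma AQ_dist_ge0 P P' : 0 <= AQ_dist Q d P P'.
Proof. exact: G_tuple_ge0. Qed.

Lemma AQ_dist_matching (P P' : AQ M Q) :
  exists s : 'S_Q, forall j, d (AQ_rep P j) (AQ_rep P' (s j)) <= AQ_dist Q d P P'.
Proof.
case: (G_tuple_attained (AQ_rep P) (AQ_rep P')) => s Hs; exists s => j.
by rewrite /AQ_dist Hs; exact: G_cost_ge_term.
Qed.

Lemma AQ_rep_spec (P : AQ M Q) : proj1_sig P = perm_orbit (AQ_rep P).
Proof. exact: (proj2_sig (constructive_indefinite_description _ (proj2_sig P))). Qed.

Lemma AQ_of_rep (P : AQ M Q) : AQ_of (AQ_rep P) = P.
Proof.
case: P => S HS; apply: subset_eq_compat.
by rewrite -(AQ_rep_spec (exist _ S HS)).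
Qed.

Lemma perm_orbit_refl (t : 'I_Q -> M) : perm_orbit t t.
Proof. by exists 1%g => i; rewrite perm1. Qed.

Lemma perm_orbit_eq (t t' : 'I_Q -> M) : perm_orbit t t' -> perm_orbit t' = perm_orbit t.
Proof.
case=> s Hs; apply: set_ext => u; split; case=> s' Hs'.
- by exists (s' * s)%g => i; rewrite Hs' Hs permM.
- by exists (s' * s^-1)%g => i; rewrite Hs' Hs permM permKV.
Qed.

Lemma AQ_of_perm (t : 'I_Q -> M) (s : 'S_Q) : AQ_of (fun i => t (s i)) = AQ_of t.
Proof. by apply: subset_eq_compat; apply: perm_orbit_eq; exists s. Qed.

Lemma AQ_rep_of (t : 'I_Q -> M) : exists s : 'S_Q, forall i, AQ_rep (AQ_of t) i = t (s i).
Proof.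
have : proj1_sig (AQ_of t) (AQ_rep (AQ_of t)) by rewrite AQ_rep_spec; exact: perm_orbit_refl.
by [].
Qed.

Lemma AQ_dist_of_le (t t' : 'I_Q -> M) :
  AQ_dist Q d (AQ_of t) (AQ_of t') <= sqrt (\big[Rplus/0]_(i < Q) Rsqr (d (t i) (t' i))).
Proof.
case: (AQ_rep_of t) => p Hp; case: (AQ_rep_of t') => p' Hp'.
apply: Rle_trans (G_tuple_le _ _ (p * p'^-1)%g) _; apply: sqrt_le_1_alt; apply: Req_le.
transitivity (\big[Rplus/0]_(i < Q) Rsqr (d (t (p i)) (t' (p i)))).
  by apply: eq_bigr => i _; rewrite Hp Hp' permM permKV.
by rewrite [RHS](reindex_inj (@perm_inj _ p)).
Qed.

Lemma AQ_dist_of_le_max (t t' : 'I_Q -> M) c : 0 <= c -> (forall i, d (t i) (t' i) <= c) ->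
  AQ_dist Q d (AQ_of t) (AQ_of t') <= sqrt (INR Q) * c.
Proof.
move=> Hc H; apply: Rle_trans (AQ_dist_of_le t t') _.
rewrite -(sqrt_Rsqr c Hc) -sqrt_mult; [|exact: pos_INR|exact: Rle_0_sqr].
apply: sqrt_le_1_alt; apply: sumR_le_const => i.
by apply: Rsqr_incr_1 => //; exact: rho_ge0.
Qed.

Lemma AQ_dist_xx P : AQ_dist Q d P P = 0.
Proof.
apply: Rle_antisym; last exact: AQ_dist_ge0.
rewrite -(AQ_of_rep P) -(Rmult_0_r (sqrt (INR Q))).
by apply: AQ_dist_of_le_max; [exact: Rle_refl|move=> i; rewrite rho_xx //; exact: Rle_refl].
Qed.

End AQMetric.

Section Clusters.
Variables (M : Type) (d : M -> M -> R) (Q : nat).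
Hypothesis d_metric : is_metric d.

Definition eqc (a b : M) : bool := if excluded_middle_informative (a = b) then true else false.

Lemma eqcP a b : reflect (a = b) (eqc a b).
Proof. by rewrite /eqc; case: excluded_middle_informative => H; constructor. Qed.

Definition first_index (t : 'I_Q -> M) (i : 'I_Q) : 'I_Q :=
  [arg min_(j < i | eqc (t j) (t i)) (j : nat)].

Lemma first_index_spec (t : 'I_Q -> M) i :
  t (first_index t i) = t i /\ forall j, t j = t i -> (first_index t i <= j)%N.
Proof.
rewrite /first_index; case: arg_minnP; first exact/eqcP.
by move=> k /eqcP Hk Hmin; split=> // j Hj; apply: Hmin; apply/eqcP.
Qed.

Lemma first_index_val t i : t (first_index t i) = t i.
Proof. by case: (first_index_spec t i). Qed.

Lemma first_index_eq t i j : t i = t j -> first_index t i = first_index t j.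
Proof.
move=> E; apply: val_inj => /=; apply/eqP; rewrite eqn_leq.
case: (first_index_spec t i) => Ei Hi; case: (first_index_spec t j) => Ej Hj.
by rewrite Hi ?Hj // ?Ei ?Ej E.
Qed.

Lemma first_indexK t i : first_index t (first_index t i) = first_index t i.
Proof. exact/first_index_eq/first_index_val. Qed.

Definition first_indices (t : 'I_Q -> M) : {set 'I_Q} := [set i | first_index t i == i].

Definition ndistinct (t : 'I_Q -> M) : nat := #|first_indices t|.

Lemma first_indices_inj t i i' :
  i \in first_indices t -> i' \in first_indices t -> t i = t i' -> i = i'.
Proof. by rewrite !inE => /eqP Hi /eqP Hi' E; rewrite -Hi -Hi' (first_index_eq E). Qed.

Definition separation (t : 'I_Q -> M) : R :=
  \big[Rmin/1]_(p : 'I_Q * 'I_Q) (if eqc (t p.1) (t p.2) then 1 else d (t p.1) (t p.2)).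

Lemma separation_gt0 t : 0 < separation t.
Proof.
apply: bigmin_ind => [|[i j] /=]; first lra.
by case: eqcP => E; [lra|exact: rho_gt0].
Qed.

Lemma separation_le1 t : separation t <= 1.
Proof. exact: bigmin_le_idx. Qed.

Lemma separation_le t i j : t i <> t j -> separation t <= d (t i) (t j).
Proof.
move=> E; apply: Rle_trans (bigmin_le _ _ (i, j)) _ => /=.
by case: eqcP => // _; exact: Rle_refl.
Qed.

Lemma separation_ge t c :
  c <= 1 -> (forall i j, t i <> t j -> c <= d (t i) (t j)) -> c <= separation t.
Proof. by move=> H1 H; apply: bigmin_ind => // [[i j]] /=; case: eqcP => // /H. Qed.

Lemma separated_close_eq (t : 'I_Q -> M) a b :
  d (t a) (t b) < separation t -> t a = t b.
Proof. by move=> H; apply: NNPP => /separation_le Hs; lra. Qed.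

Section CloseTuples.
Variables (P Y : 'I_Q -> M) (s : 'S_Q) (eps : R).
Hypothesis eps_small : 2 * eps < separation P.
Hypothesis Y_close : forall j, d (Y j) (P (s j)) <= eps.

Lemma close_tuples_eq i j c : d (Y j) (P i) <= c -> eps + c < separation P -> P (s j) = P i.
Proof.
move=> Hj Hc; apply: separated_close_eq; have := Y_close j.
by have := rho_tri d_metric (P (s j)) (Y j) (P i); rewrite (rho_sym d_metric (P (s j)) (Y j)); lra.
Qed.

Let phi i := first_index Y ((s^-1)%g i).

Lemma close_Y_inv i : d (Y ((s^-1)%g i)) (P i) <= eps.
Proof. by have := Y_close ((s^-1)%g i); rewrite permKV. Qed.

Lemma close_phi_inj : {in first_indices P &, injective phi}.
Proof.
move=> i i' Hi Hi' E; apply: (first_indices_inj Hi Hi').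
have EY : Y ((s^-1)%g i) = Y ((s^-1)%g i').
  by rewrite -(first_index_val Y) -/(phi i) E first_index_val.
have Hi'i : d (Y ((s^-1)%g i')) (P i) <= eps by rewrite -EY; exact: close_Y_inv.
by have := close_tuples_eq Hi'i ltac:(lra); rewrite permKV.
Qed.

Lemma close_phi_sub : phi @: first_indices P \subset first_indices Y.
Proof. by apply/subsetP => k /imsetP [i _ ->]; rewrite inE /phi first_indexK. Qed.

Lemma ndistinct_le_close : (ndistinct P <= ndistinct Y)%N.
Proof.
by rewrite /ndistinct -(card_in_imset close_phi_inj); exact: subset_leq_card close_phi_sub.
Qed.

Lemma close_eq_of_ndistinct : (ndistinct Y <= ndistinct P)%N ->
  forall j j', P (s j) = P (s j') -> Y j = Y j'.
Proof.
move=> Hle.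
have Heq : phi @: first_indices P = first_indices Y.
  by apply/eqP; rewrite eqEcard close_phi_sub (card_in_imset close_phi_inj).
have Hrep j : exists i, i \in first_indices P /\ Y j = Y ((s^-1)%g i) /\ P (s j) = P i.
  have : first_index Y j \in first_indices Y by rewrite inE first_indexK.
  rewrite -Heq => /imsetP [i Hi E]; exists i; split=> //.
  have EY : Y j = Y ((s^-1)%g i) by rewrite -(first_index_val Y j) E /phi first_index_val.
  by split=> //; apply: (close_tuples_eq (c := eps)); [rewrite EY; exact: close_Y_inv|lra].
move=> j j' E; case: (Hrep j) => i [Hi [E1 E2]]; case: (Hrep j') => i' [Hi' [E1' E2']].
by rewrite E1 E1' (first_indices_inj Hi Hi' (etrans (esym E2) (etrans E E2'))).
Qed.

End CloseTuples.
End Clusters.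

Section BranchDecomposition.
Variables (X : Type) (rho : X -> X -> R) (M : Type) (d : M -> M -> R) (Q : nat).
Hypotheses (rho_metric : is_metric rho) (d_metric : is_metric d).
Variables (C : X -> Prop) (g : X -> AQ M Q) (L : R).
Hypothesis L_gt0 : 0 < L.
Hypothesis g_lip : forall y z, C y -> C z -> AQ_dist Q d (g y) (g z) <= L * rho y z.

Local Notation G y := (AQ_rep (g y)).

Definition sublevel (k : nat) (y : X) : Prop := C y /\ (ndistinct (G y) <= k)%N.

Definition branch (s : R) (p : M) (y : X) : M :=
  match excluded_middle_informative (exists v, (exists j, G y j = v) /\ d v p < s / 2) with
  | left H => proj1_sig (constructive_indefinite_description _ H)
  | right _ => p
  end.

Lemma lipschitz_matching y z : C y -> C z ->
  exists s : 'S_Q, forall j, d (G y j) (G z (s j)) <= L * rho y z.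
Proof.
move=> Cy Cz; case: (AQ_dist_matching d_metric (g y) (g z)) => s Hs.
by exists s => j; apply: Rle_trans (Hs j) (g_lip Cy Cz).
Qed.

(* [ndistinct (G y)] is lower semicontinuous on [C]. *)
Lemma sublevel_closed k : is_closed rho C -> is_closed rho (sublevel k).
Proof.
move=> HC x Hx; case: (classic (C x)) => Cx; last first.
  by case: (HC x Cx) => r [Hr H]; exists r; split=> // y /H NC [].
have Hk : (k < ndistinct (G x))%N by rewrite ltnNge; apply/negP => H; apply: Hx.
have Hsep := separation_gt0 d_metric (G x).
exists (separation d (G x) / (4 * L)); split; first by apply: Rdiv_lt_0_compat; lra.
move=> y Hy [Cy Hky]; rewrite /Defs.ball in Hy.
case: (lipschitz_matching Cy Cx) => s Hs.
have HLy : L * rho y x <= separation d (G x) / 4.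
  have := Rmult_le_compat_l L _ _ (Rlt_le _ _ L_gt0) (Rlt_le _ _ Hy).
  by have -> : L * (separation d (G x) / (4 * L)) = separation d (G x) / 4 by field; lra.
have Hsmall : 2 * (separation d (G x) / 4) < separation d (G x) by lra.
have := ndistinct_le_close d_metric Hsmall (fun j => Rle_trans _ _ _ (Hs j) HLy).
by move=> /leq_trans /(_ Hky); rewrite leqNgt Hk.
Qed.

Section Center.
Variable y0 : X.
Hypothesis C_y0 : C y0.

Local Notation sep0 := (separation d (G y0)).
Local Notation k0 := (ndistinct (G y0)).

Definition center_radius : R := sep0 / (8 * L).

Lemma center_radius_gt0 : 0 < center_radius.
Proof. by apply: Rdiv_lt_0_compat; [exact: separation_gt0|lra]. Qed.

Lemma branch_spec y : sublevel k0 y -> rho y y0 <= center_radius ->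
  exists s : 'S_Q,
    (forall i, branch sep0 (G y0 i) y = G y ((s^-1)%g i)) /\
    (forall i, d (G y ((s^-1)%g i)) (G y0 i) <= sep0 / 8) /\
    (forall i j, d (G y j) (G y0 i) < sep0 / 2 -> G y j = branch sep0 (G y0 i) y).
Proof.
move=> [Cy Hk] Hr; have Hs0 := separation_gt0 d_metric (G y0).
case: (lipschitz_matching Cy C_y0) => s Hs.
have HLr : L * rho y y0 <= sep0 / 8.
  have := Rmult_le_compat_l L _ _ (Rlt_le _ _ L_gt0) Hr.
  by rewrite /center_radius; have -> : L * (sep0 / (8 * L)) = sep0 / 8 by field; lra.
have Hc j : d (G y j) (G y0 (s j)) <= sep0 / 8 by apply: Rle_trans (Hs j) HLr.
have Hsmall : 2 * (sep0 / 8) < sep0 by lra.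
have Hc' i : d (G y ((s^-1)%g i)) (G y0 i) <= sep0 / 8 by have := Hc ((s^-1)%g i); rewrite permKV.
have Huniq i j : d (G y j) (G y0 i) < sep0 / 2 -> G y j = G y ((s^-1)%g i).
  move=> Hj; apply: (close_eq_of_ndistinct d_metric Hsmall Hc Hk); rewrite permKV.
  by apply: (close_tuples_eq d_metric Hc (Rlt_le _ _ Hj)); lra.
have Hh i : branch sep0 (G y0 i) y = G y ((s^-1)%g i).
  rewrite /branch; case: excluded_middle_informative => [H|H].
  - case: (constructive_indefinite_description _ H) => v [[j Ej] Hv] /=.
    by rewrite -Ej in Hv *; exact: Huniq.
  - by case: H; exists (G y ((s^-1)%g i)); split; [eexists|have := Hc' i; lra].
by exists s; split=> //; split=> // i j Hj; rewrite Hh; exact: Huniq.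
Qed.

Lemma g_eq_branches y : sublevel k0 y -> rho y y0 <= center_radius ->
  g y = AQ_of (fun i => branch sep0 (G y0 i) y).
Proof.
move=> Hy Hr; case: (branch_spec Hy Hr) => s [Hh _].
rewrite (functional_extensionality _ _ Hh).
by rewrite (AQ_of_perm (fun j => G y j)) AQ_of_rep.
Qed.

Lemma branch_lipschitz y z i :
  sublevel k0 y -> rho y y0 <= center_radius -> sublevel k0 z -> rho z y0 <= center_radius ->
  d (branch sep0 (G y0 i) y) (branch sep0 (G y0 i) z) <= L * rho y z.
Proof.
move=> Hy Hry Hz Hrz; have Hs0 := separation_gt0 d_metric (G y0).
case: (branch_spec Hy Hry) => s [Hh [Hc _]]; case: (branch_spec Hz Hrz) => s' [_ [_ Hu]].
case: (Hy) => Cy _; case: (Hz) => Cz _; case: (lipschitz_matching Cy Cz) => t Ht.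
rewrite Hh; set j := (s^-1)%g i.
have HLyz : L * rho y z <= sep0 / 4.
  have Hyz : rho y z <= 2 * center_radius.
    by have := rho_tri rho_metric y y0 z; rewrite (rho_sym rho_metric y0 z); lra.
  have := Rmult_le_compat_l L _ _ (Rlt_le _ _ L_gt0) Hyz.
  by rewrite /center_radius; have -> : L * (2 * (sep0 / (8 * L))) = sep0 / 4 by field; lra.
rewrite -(Hu i (t j)); first exact: Ht.
have := Ht j; have := Hc i; rewrite -/j.
have := rho_tri d_metric (G z (t j)) (G y j) (G y0 i).
by rewrite (rho_sym d_metric (G z (t j)) (G y j)); lra.
Qed.

Lemma branch_inj y i j : sublevel k0 y -> rho y y0 <= center_radius ->
  branch sep0 (G y0 i) y = branch sep0 (G y0 j) y -> G y0 i = G y0 j.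
Proof.
move=> Hy Hr Eij; case: (branch_spec Hy Hr) => s [Hh [Hc _]]; rewrite !Hh in Eij.
apply: (separated_close_eq (d := d)); have := separation_gt0 d_metric (G y0).
have := Hc i; have := Hc j; rewrite Eij.
have := rho_tri d_metric (G y0 i) (G y ((s^-1)%g j)) (G y0 j).
by rewrite (rho_sym d_metric (G y0 i) (G y ((s^-1)%g j))); lra.
Qed.

End Center.

Lemma separation_near x y0 : C x -> C y0 -> ndistinct (G y0) = ndistinct (G x) ->
  L * rho x y0 <= separation d (G x) / 40 -> separation d (G x) / 2 <= separation d (G y0).
Proof.
move=> Cx Cy0 Hk HLe; set Px := G x; have Hsx := separation_gt0 d_metric Px.
case: (lipschitz_matching Cy0 Cx) => sg Hsg; rewrite (rho_sym rho_metric) in Hsg.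
have Hc j : d (G y0 j) (Px (sg j)) <= separation d Px / 40 by apply: Rle_trans (Hsg j) HLe.
have Hsmall : 2 * (separation d Px / 40) < separation d Px by lra.
have Heq := close_eq_of_ndistinct d_metric Hsmall Hc (eq_leq Hk).
apply: separation_ge; first by have := separation_le1 d Px; lra.
move=> i j Hij; have Hne : Px (sg i) <> Px (sg j) by move/Heq.
have := separation_le d Hne; have := Hc i; have := Hc j.
have := rho_tri d_metric (Px (sg i)) (G y0 i) (Px (sg j)).
have := rho_tri d_metric (G y0 i) (G y0 j) (Px (sg j)).
by rewrite (rho_sym d_metric (Px (sg i)) (G y0 i)); lra.
Qed.

Lemma center_radius_near x : C x -> exists eps, 0 < eps /\ forall y0, C y0 ->
  ndistinct (G y0) = ndistinct (G x) -> rho x y0 < eps -> rho x y0 < center_radius y0.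
Proof.
move=> Cx; have Hsx := separation_gt0 d_metric (G x).
exists (separation d (G x) / (40 * L)); split; first by apply: Rdiv_lt_0_compat; lra.
move=> y0 Cy0 Hk Hxy0.
have HLe : L * rho x y0 <= separation d (G x) / 40.
  have := Rmult_le_compat_l L _ _ (Rlt_le _ _ L_gt0) (Rlt_le _ _ Hxy0).
  by have -> : L * (separation d (G x) / (40 * L)) = separation d (G x) / 40 by field; lra.
have := separation_near Cx Cy0 Hk HLe; rewrite /center_radius => Hsep.
have HiL : 0 < / L by apply: Rinv_0_lt_compat.
by apply: Rlt_le_trans Hxy0 _; rewrite /Rdiv !Rinv_mult; nra.
Qed.
End BranchDecomposition.

Lemma lipschitz_on_pos (X N : Type) (rho : X -> X -> R) (e : N -> N -> R) B (F : X -> N) :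
  is_metric rho -> lipschitz_on rho e B F ->
  exists L, 0 < L /\ forall y z, B y -> B z -> e (F y) (F z) <= L * rho y z.
Proof.
move=> Hmet [L0 HL0]; exists (Rabs L0 + 1); split; first by have := Rabs_pos L0; lra.
move=> y z By Bz; apply: Rle_trans (HL0 y z By Bz) _.
by apply: Rmult_le_compat_r; [exact: rho_ge0|have := Rle_abs L0; lra].
Qed.

Lemma lipschitz_on_AQ_of (X M : Type) (rho : X -> X -> R) (d : M -> M -> R) (Q : nat)
    (B : 'I_Q -> X -> Prop) (F : 'I_Q -> X -> M) :
  is_metric rho -> is_metric d -> (forall i, lipschitz_on rho d (B i) (F i)) ->
  lipschitz_on rho (AQ_dist Q d) (fun y => forall i, B i y) (fun y => AQ_of (fun i => F i y)).
Proof.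
move=> Hmet Hdm HF; have [Lf HLf] := fun_choice HF.
exists (sqrt (INR Q) * \big[Rplus/0]_(i < Q) Rabs (Lf i)) => y z By Bz.
have HLs : 0 <= \big[Rplus/0]_(i < Q) Rabs (Lf i) by apply: sumR_ge0 => i; exact: Rabs_pos.
rewrite Rmult_assoc; apply: (AQ_dist_of_le_max Hdm).
  by apply: Rmult_le_pos => //; exact: rho_ge0.
move=> i; apply: Rle_trans (HLf i y z (By i) (Bz i)) _.
apply: Rmult_le_compat_r; first exact: rho_ge0.
apply: Rle_trans (Rle_abs _) _.
by apply: (sumR_ge_term (F := fun j => Rabs (Lf j))) => j; exact: Rabs_pos.
Qed.

Lemma separable_net (X : Type) (rho : X -> X -> R) : is_metric rho -> separable rho ->
  exists net : (X -> Prop) -> nat -> nat -> option X,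
    (forall P a n y, net P a n = Some y -> P y) /\
    (forall P x eps, P x -> 0 < eps -> exists a n y, net P a n = Some y /\ rho x y < eps).
Proof.
move=> Hmet [S [[f Hinj] Hdense]].
pose cand P a n y := P y /\ exists s, S s /\ f s = a /\ rho y s < / (INR n + 1).
exists (fun P a n => match excluded_middle_informative (exists y, cand P a n y) with
  | left H => Some (proj1_sig (constructive_indefinite_description _ H))
  | right _ => None end).
split=> [P a n y|P x eps Px Heps].
  case: excluded_middle_informative => // H [<-].
  by case: (proj2_sig (constructive_indefinite_description _ H)).
have [n Hn] : exists n, / (INR n + 1) < eps / 2 by apply: INR_inv_lt; lra.
case: (Hdense x _ (INR_inv_gt0 n)) => s [Ss Hxs]; exists (f s), n.
case: excluded_middle_informative => H; last by case: H; exists x; split=> //; exists s.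
eexists; split; first reflexivity.
case: (proj2_sig (constructive_indefinite_description _ H)) => _ [s' [Ss' [Es' Hs']]].
have Ess : s' = s by apply: Hinj.
subst s'; have := rho_tri Hmet x s (proj1_sig (constructive_indefinite_description _ H)).
by rewrite (rho_sym Hmet s); lra.
Qed.

Section Limits.
Variables (X : Type) (rho : X -> X -> R) (mu : (X -> Prop) -> Rbar) (K : R).
Variables (M : Type) (d : M -> M -> R) (Q : nat).
Hypotheses (mu_doubling : doubling_mms rho mu K) (d_metric : is_metric d).

Lemma mu_lim_within_transfer x (A A' : X -> Prop) (f f' : X -> R) l U :
  mu_nbhd rho mu x U -> (forall y, U y -> A y -> y <> x -> A' y /\ f y = f' y) ->
  mu_lim_within rho mu A' x f' l -> mu_lim_within rho mu A x f l.
Proof.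
move=> HU HA Hlim eps He; case: (Hlim eps He) => V [HV HVlim].
exists (fun y => U y /\ V y); split; first exact: (mu_nbhdI mu_doubling).
by move=> y [Uy Vy] Ay Hyx; have [A'y ->] := HA y Uy Ay Hyx; exact: HVlim.
Qed.

Lemma mu_lim_AQ_of x (A : X -> Prop) (B : 'I_Q -> X -> Prop) (f F : 'I_Q -> X -> M) :
  (forall i, mu_lim_within rho mu (fun y => A y /\ B i y) x
               (fun y => d (f i y) (F i y) / rho y x) 0) ->
  mu_lim_within rho mu (fun y => A y /\ forall i, B i y) x
    (fun y => AQ_dist Q d (AQ_of (fun i => f i y)) (AQ_of (fun i => F i y)) / rho y x) 0.
Proof.
move=> Hlim eps He; have Hsq := sqrt_pos (INR Q); set eps' := eps / (sqrt (INR Q) + 1).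
have He' : 0 < eps' by apply: Rdiv_lt_0_compat; lra.
have [U HU] := fun_choice (fun i => Hlim i eps' He').
exists (fun y => forall i, U i y); split.
  exact: (mu_nbhd_bigI mu_doubling (fun i => proj1 (HU i))).
move=> y HUy [Ay By] Hyx; have Hp := rho_gt0 (doubling_metric mu_doubling) Hyx.
have Hdi i : d (f i y) (F i y) <= eps' * rho y x.
  have := proj2 (HU i) y (HUy i) (conj Ay (By i)) Hyx.
  rewrite Rminus_0_r Rabs_right; last by apply/Rle_ge/Rle_mult_inv_pos; [exact: rho_ge0|].
  move=> H; apply: Rlt_le; apply: (Rmult_lt_reg_r (/ rho y x)); first exact: Rinv_0_lt_compat.
  by rewrite Rmult_assoc Rinv_r; lra.
have Hb := AQ_dist_of_le_max d_metric (Rmult_le_pos _ _ (Rlt_le _ _ He') (Rlt_le _ _ Hp)) Hdi.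
rewrite Rminus_0_r Rabs_right; last by apply/Rle_ge/Rle_mult_inv_pos => //; exact: AQ_dist_ge0.
apply: (Rmult_lt_reg_r (rho y x)) => //; rewrite /Rdiv Rmult_assoc Rinv_l ?Rmult_1_r; last lra.
apply: Rle_lt_trans Hb _; rewrite -Rmult_assoc; apply: Rmult_lt_compat_r => //.
have -> : sqrt (INR Q) * eps' = eps * (sqrt (INR Q) / (sqrt (INR Q) + 1)).
  by rewrite /eps'; field; lra.
have : sqrt (INR Q) / (sqrt (INR Q) + 1) < 1.
  by apply: (Rmult_lt_reg_r (sqrt (INR Q) + 1)); [lra|rewrite /Rdiv Rmult_assoc Rinv_l; lra].
by move=> H; have := Rmult_lt_compat_l eps _ _ He H; lra.
Qed.

Variable D : X -> (X -> Prop) -> (X -> M) -> Prop.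
Hypothesis D_distr : approx_distribution rho mu d D.

Lemma DQ_of_germs x (B : 'I_Q -> X -> Prop) (F : 'I_Q -> X -> M) :
  (forall i, D x (B i) (F i)) -> (forall i j, F i x = F j x -> B i = B j /\ F i = F j) ->
  DQ rho mu d Q D x (fun y => forall i, B i y) (fun y => AQ_of (fun i => F i y)).
Proof.
move=> HD Hcompat; have Hrep i := proj1 D_distr _ _ _ (HD i).
have HBs := mu_nbhd_bigI mu_doubling (fun i => proj1 (Hrep i)).
have Hlip := lipschitz_on_AQ_of (doubling_metric mu_doubling) d_metric (fun i => proj2 (Hrep i)).
split; first by split.
exists (fun y => forall i, B i y), (fun y => AQ_of (fun i => F i y)); split; first by split.
split; first by apply: (germ_equiv_refl mu_doubling); exact: AQ_dist_xx.
exists B, F; split=> //; split.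
- case: (mu_nbhd_borel mu_doubling HBs) => W [HWb [HW HWs]].
  by exists W; do 3 split=> //; move=> y /HWs.
- by move=> i j /Hcompat [-> ->]; apply: (germ_equiv_refl mu_doubling); exact: rho_xx.
Qed.

End Limits.

Section Assembly.
Variables (X : Type) (rho : X -> X -> R) (mu : (X -> Prop) -> Rbar) (K : R).
Variables (M : Type) (d : M -> M -> R) (Q : nat) (D : X -> (X -> Prop) -> (X -> M) -> Prop).
Hypotheses (mu_doubling : doubling_mms rho mu K) (d_metric : is_metric d).
Hypothesis D_distr : approx_distribution rho mu d D.
Variables (C : X -> Prop) (g : X -> AQ M Q) (L : R).
Hypotheses (L_gt0 : 0 < L) (C_closed : is_closed rho C).
Hypothesis g_lip : forall y z, C y -> C z -> AQ_dist Q d (g y) (g z) <= L * rho y z.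
Variable y0 : X.
Hypothesis C_y0 : C y0.

Local Notation metric := (doubling_metric mu_doubling).
Local Notation G y := (AQ_rep (g y)).
Local Notation level := (sublevel C g (ndistinct (G y0))).
Local Notation r0 := (center_radius d g L y0).
Local Notation h i := (branch d g (separation d (G y0)) (G y0 i)).
Local Notation level_closed :=
  (sublevel_closed d_metric L_gt0 g_lip (k := ndistinct (G y0)) C_closed).
Local Notation branch_lip := (branch_lipschitz metric d_metric L_gt0 g_lip C_y0).

Definition piece (y : X) : Prop := level y /\ rho y y0 <= r0.

Lemma piece_closed : is_closed rho piece.
Proof.
apply: closed_setI; first exact: level_closed.
exact: closed_ball_closed metric y0 r0.
Qed.

Definition piece_window (x y : X) : Prop := y = x \/ ~ C y \/ (level y /\ ball rho y0 r0 y).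

Lemma piece_window_nbhd x : rho x y0 < r0 -> density_point rho mu x level ->
  mu_nbhd rho mu x (piece_window x).
Proof.
move=> Hx Hdx; split; first by left.
exists (fun y => ~ C y \/ (level y /\ ball rho y0 r0 y)); split.
  apply: borel_setU; first by apply: borel_setC; exact: borel_closed.
  apply: borel_setI; last exact: borel_ball metric y0 r0.
  by apply: borel_closed; exact: level_closed.
split; first by move=> y H; right.
apply: (density_point_mono mu_doubling _ (fun y H => or_intror H)).
have Hball := density_point_open mu_doubling (ball_open (x := y0) (r := r0) metric) Hx.
exact: (density_pointI mu_doubling Hdx Hball).
Qed.

Lemma piece_window_piece x y : piece_window x y -> C y -> y <> x -> piece y.
Proof. by case=> [//|[//|[Hk Hb]]] _ _; split=> //; rewrite /Defs.ball in Hb; lra. Qed.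

Lemma mu_acc_piece x : mu_acc rho mu C x -> rho x y0 < r0 -> density_point rho mu x level ->
  mu_acc rho mu piece x.
Proof.
move=> Hacc Hx Hdx U HU.
case: (Hacc _ (mu_nbhdI mu_doubling HU (piece_window_nbhd Hx Hdx))) => y [Cy [[Uy Wy] Hyx]].
by exists y; split=> //; exact: piece_window_piece Wy Cy Hyx.
Qed.

Lemma A_mu_branch x i : mu_acc rho mu C x -> level x -> rho x y0 < r0 ->
  density_point rho mu x level -> A_mu rho mu d piece (h i) x.
Proof.
move=> Hacc Hk Hx Hdx; have Px : piece x by split=> //; lra.
split=> //; split; first exact: mu_acc_piece.
exists (fun _ => True), L; split; first exact: (mu_nbhd_setT mu_doubling).
move=> y _ [Hy Hry] Hyx; have Hp := rho_gt0 metric Hyx.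
have := branch_lip i Hy Hry (proj1 Px) (proj2 Px).
by move=> H; apply: (Rmult_le_reg_r (rho y x)) => //; rewrite /Rdiv Rmult_assoc Rinv_l; lra.
Qed.

Lemma approx_diff_DQ_of_branches x :
  mu_acc rho mu C x -> level x -> rho x y0 < r0 -> density_point rho mu x level ->
  (forall i, approx_diff rho mu d D piece (h i) x) ->
  approx_diff rho mu (AQ_dist Q d) (DQ rho mu d Q D) C g x.
Proof.
move=> Hacc Hk Hx Hdx Happ; have Hx' : rho x y0 <= r0 by lra.
pose good f (BF : (X -> Prop) * (X -> M)) := D x BF.1 BF.2 /\ BF.2 x = f x /\
  mu_lim_within rho mu (fun y => piece y /\ BF.1 y) x (fun y => d (f y) (BF.2 y) / rho y x) 0.
have [germ Hgerm] : exists germ, forall f, (exists BF, good f BF) -> good f (germ f).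
  apply: (fun_choice (P := fun f BF => (exists BF, good f BF) -> good f BF)) => f.
  case: (classic (exists BF, good f BF)) => [[BF HBF]|Hno].
    by exists BF.
  by exists (fun _ => True, f).
have Hgood i : good (h i) (germ (h i)).
  by apply: Hgerm; case: (Happ i) => _ [_ [B0 [F0 H]]]; exists (B0, F0).
pose Bi i := (germ (h i)).1; pose Fi i := (germ (h i)).2.
split; first exact: (proj1 Hk); split=> //.
exists (fun y => forall i, Bi i y), (fun y => AQ_of (fun i => Fi i y)); split; last split.
- apply: (DQ_of_germs mu_doubling d_metric D_distr) => [i|i j]; first exact: (proj1 (Hgood i)).
  rewrite /Fi !(proj1 (proj2 (Hgood _))) => /(branch_inj d_metric L_gt0 g_lip C_y0 Hk Hx') E.
  by rewrite /Bi /Fi E.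
- rewrite (g_eq_branches d_metric L_gt0 g_lip C_y0 Hk Hx'); f_equal.
  by apply: functional_extensionality => i; exact: (proj1 (proj2 (Hgood i))).
- apply: (mu_lim_within_transfer mu_doubling (piece_window_nbhd Hx Hdx)); last first.
    exact: (mu_lim_AQ_of mu_doubling d_metric (fun i => proj2 (proj2 (Hgood i)))).
  move=> y Wy [Cy By] Hyx; have Py := piece_window_piece Wy Cy Hyx; split=> //.
  by rewrite (g_eq_branches d_metric L_gt0 g_lip C_y0 (proj1 Py) (proj2 Py)).
Qed.

(* Removing the null set of non-density points, rather than asking for density, keeps the
   set measurable. *)
Definition branch_bad_set (B : X -> Prop) (i : 'I_Q) (x : X) : Prop :=
  (B x /\ level x /\ ball rho y0 r0 x /\ ~ (level x /\ ~ density_point rho mu x level)) /\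
  ~ approx_diff rho mu d D piece (h i) x.

Lemma branch_bad_set_null B i : diff_complete rho mu d D -> mu_measurable mu B ->
  (forall x, B x -> A_mu rho mu (AQ_dist Q d) C g x) -> mu (branch_bad_set B i) = Fin 0.
Proof.
move=> HDc HBm HBA; have Hom := doubling_outer_measure mu_doubling.
apply: HDc.
- exists y0; split; first by split.
  by rewrite (rho_xx metric); apply: Rlt_le; exact: center_radius_gt0.
- exact: piece_closed.
- by exists L => y z [Hy Hry] [Hz Hrz]; exact: branch_lip i Hy Hry Hz Hrz.
- apply: (measurable_setI Hom) => //; apply: (measurable_setI Hom).
    apply: (borel_measurable mu_doubling); apply: borel_closed.
    exact: level_closed.
  apply: (measurable_setI Hom).
    by apply: (borel_measurable mu_doubling); exact: borel_ball metric _ _.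
  apply: measurable_setC; apply: (null_measurable Hom).
  exact: (density_point_ae mu_doubling level_closed).
- move=> x [Bx [Hk [Hb HN]]]; have [Cx [Hacc _]] := HBA x Bx.
  by apply: A_mu_branch => //; apply: NNPP => H; apply: HN.
Qed.

Lemma not_approx_diff_branch B x : B x -> (forall x, B x -> A_mu rho mu (AQ_dist Q d) C g x) ->
  level x -> rho x y0 < r0 -> density_point rho mu x level ->
  ~ approx_diff rho mu (AQ_dist Q d) (DQ rho mu d Q D) C g x -> exists i, branch_bad_set B i x.
Proof.
move=> Bx HBA Hk Hx Hdx Hnd; have [Cx [Hacc _]] := HBA x Bx.
have [i Hi] : exists i, ~ approx_diff rho mu d D piece (h i) x.
  apply: NNPP => H; apply/Hnd/approx_diff_DQ_of_branches => // i.
  by apply: NNPP => Hi; apply: H; exists i.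
by exists i; split=> //; do 3 split=> //; case.
Qed.

End Assembly.

Theorem theorem3p3 (X : Type) (rho : X -> X -> R) (mu : (X -> Prop) -> Rbar) (K : R)
    (M : Type) (d : M -> M -> R) (Q : nat)
    (D : X -> (X -> Prop) -> (X -> M) -> Prop) :
  doubling_mms rho mu K ->
  complete_metric d ->
  (1 <= Q)%N ->
  approx_distribution rho mu d D ->
  diff_complete rho mu d D ->
  diff_complete rho mu (AQ_dist Q d) (DQ rho mu d Q D).
Proof.
move=> Hd [Hdm _] _ HD HDc C g B _ HCc Hg HBm HBA.
have Hmet := doubling_metric Hd; have Hom := doubling_outer_measure Hd.
have [L [HL Hlip]] := lipschitz_on_pos Hmet Hg.
have [net [Hnet_in Hnet_dense]] := separable_net Hmet (doubling_separable Hd).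
pose center k := net (fun y => C y /\ ndistinct (AQ_rep (g y)) = k).
pose Z a n k i x :=
  if center k a n is Some y0 then branch_bad_set rho mu d D C g L y0 B i x else False.
apply: (null_subset Hom (B := fun x => (exists k, sublevel C g k x /\
    ~ density_point rho mu x (sublevel C g k)) \/ exists a n k i, Z a n k i x)).
  apply: (null_setU Hom); first apply: (null_bigcup Hom) => k.
    exact: (density_point_ae Hd (sublevel_closed Hdm HL Hlip HCc)).
  apply: (null_bigcup Hom) => a; apply: (null_bigcup Hom) => n; apply: (null_bigcup Hom) => k.
  apply: (null_bigcup_ord Hom) => i; rewrite /Z; case E: (center k a n) => [y0|].
  - exact: (branch_bad_set_null Hd Hdm HL HCc Hlip (proj1 (Hnet_in _ _ _ _ E)) i HDc HBm HBA).
  - exact: (mu_set0 Hom).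
move=> x [Bx Hnd]; have [Cx _] := HBA x Bx; set k := ndistinct (AQ_rep (g x)).
case: (classic (density_point rho mu x (sublevel C g k))) => Hdx; last by left; exists k.
right; have [eps [Heps Hnear]] := center_radius_near Hmet Hdm HL Hlip Cx.
have [a [n [y0 [E Hxy0]]]] :=
  Hnet_dense (fun y => C y /\ ndistinct (AQ_rep (g y)) = k) x eps (conj Cx erefl) Heps.
have [Cy0 Hky0] := Hnet_in _ _ _ _ E.
rewrite -Hky0 in Hdx; have Hk : sublevel C g (ndistinct (AQ_rep (g y0))) x by split; rewrite ?Hky0.
have [i Hi] :=
  not_approx_diff_branch Hd Hdm HD HL HCc Hlip Cy0 Bx HBA Hk (Hnear y0 Cy0 Hky0 Hxy0) Hdx Hnd.
by exists a, n, k, i; rewrite /Z /center E.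
Qed.
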